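(* For every $n\ge1$, $L^{\mathrm S}_{\mathrm{RCC8}}(\mathbb R^n,\mathbb R^n_{\mathrm{rect}})$ is recursively enumerable.
   Context: $\mathbb R^n_{\mathrm{rect}}$ is the set of closed hyper-rectangles $\prod_{i=1}^n C_i$ with each $C_i$ a non-singleton closed interval of $\mathbb R$. The structure $\mathfrak R(\mathbb R^n,\mathbb R^n_{\mathrm{rect}})$ has domain $\mathbb R^n_{\mathrm{rect}}$ and the eight RCC8 relations w.r.t. the Euclidean interior $\mathbb I$: $\mathrm{dc}$: $s\cap t=\emptyset$; $\mathrm{ec}$: $\mathbb Is\cap\mathbb It=\emptyset\neq s\cap t$; $\mathrm{po}$: $\mathbb Is\cap\mathbb It\ne\emptyset$, $s\not\subseteq t$, $t\not\subseteq s$; $\mathrm{eq}$: $s=t$; $\mathrm{tpp}$: $s\subseteq t$, $s\not\subseteq\mathbb It$, $s\ne t$; $\mathrm{ntpp}$: $s\subseteq\mathbb It$, $s\ne t$; $\mathrm{tppi},\mathrm{ntppi}$ their inverses. $\mathcal L_{\mathrm{RCC8}}$ is the modal language over propositional variables $p_1,p_2,\dots$ with $\neg,\wedge$ and a box $[r]$ for each relation, $\mathfrak M,s\models[r]\varphi$ iff $\varphi$ holds at all $t$ with $(s,t)\in r$. $L^{\mathrm S}_{\mathrm{RCC8}}(\mathbb R^n,\mathbb R^n_{\mathrm{rect}})$ is the set of formulas true at all points of all models based on substructures (restrictions to non-empty subsets of the domain) of $\mathfrak R(\mathbb R^n,\mathbb R^n_{\mathrm{rect}})$. *)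

From Stdlib Require Import Reals List Arith.
Import ListNotations.
Open Scope R_scope.

Definition coord (n : nat) := {i : nat | (i < n)%nat}.
Definition point (n : nat) := coord n -> R.

Record rect (n : nat) := Rect {
  lo : coord n -> R;
  hi : coord n -> R;
  lo_lt_hi : forall i, lo i < hi i }.
Arguments lo {n}. Arguments hi {n}.

Definition region {n} (r : rect n) : point n -> Prop :=
  fun x => forall i, lo r i <= x i <= hi r i.

(** Euclidean interior (written with sup-norm balls, which generate the
    Euclidean topology on R^n). *)
Definition interior {n} (S : point n -> Prop) : point n -> Prop :=
  fun x => exists e, 0 < e /\
    forall y : point n, (forall i, Rabs (y i - x i) < e) -> S y.

Definition subset {n} (S T : point n -> Prop) := forall x, S x -> T x.
Definition seteq {n} (S T : point n -> Prop) := forall x, S x <-> T x.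
Definition meets {n} (S T : point n -> Prop) := exists x, S x /\ T x.

Inductive rcc8 := DC | EC | PO | EQ | TPP | NTPP | TPPI | NTPPI.

Definition rcc8_sets {n} (r : rcc8) (s t : point n -> Prop) : Prop :=
  match r with
  | DC => ~ meets s t
  | EC => ~ meets (interior s) (interior t) /\ meets s t
  | PO => meets (interior s) (interior t) /\ ~ subset s t /\ ~ subset t s
  | EQ => seteq s t
  | TPP => subset s t /\ ~ subset s (interior t) /\ ~ seteq s t
  | NTPP => subset s (interior t) /\ ~ seteq s t
  | TPPI => subset t s /\ ~ subset t (interior s) /\ ~ seteq t s
  | NTPPI => subset t (interior s) /\ ~ seteq t s
  end.

Definition rcc8_rel {n} (r : rcc8) (s t : rect n) : Prop :=
  rcc8_sets r (region s) (region t).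

Inductive form :=
| Var : nat -> form
| Neg : form -> form
| And : form -> form -> form
| Box : rcc8 -> form -> form.

(** Truth in a model based on the substructure of R(R^n, R^n_rect) with
    domain W, under valuation V. *)
Fixpoint sat {n} (W : rect n -> Prop) (V : nat -> rect n -> Prop)
    (s : rect n) (phi : form) : Prop :=
  match phi with
  | Var k => V k s
  | Neg a => ~ sat W V s a
  | And a b => sat W V s a /\ sat W V s b
  | Box r a => forall t, W t -> rcc8_rel r s t -> sat W V t a
  end.

(** L^S_RCC8(R^n, R^n_rect): formulas true at all points of all models
    based on substructures (non-empty subsets of the domain). *)
Definition LS_rect (n : nat) (phi : form) : Prop :=
  forall (W : rect n -> Prop), (exists s, W s) ->
  forall (V : nat -> rect n -> Prop) (s : rect n), W s -> sat W V s phi.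

Inductive prf :=
| Zero : prf
| Succ : prf
| Proj : nat -> prf
| Comp : prf -> list prf -> prf
| Prec : prf -> prf -> prf
| Mu : prf -> prf.

Inductive eval : prf -> list nat -> nat -> Prop :=
| ev_zero v : eval Zero v 0
| ev_succ v : eval Succ v (S (hd 0%nat v))
| ev_proj i v : eval (Proj i) v (nth i v 0%nat)
| ev_comp f gs v ws y : evals gs v ws -> eval f ws y -> eval (Comp f gs) v y
| ev_prec0 f g v y : eval f v y -> eval (Prec f g) (0%nat :: v) y
| ev_precS f g x v r y :
    eval (Prec f g) (x :: v) r -> eval g (x :: r :: v) y ->
    eval (Prec f g) (S x :: v) y
| ev_mu f v m : eval f (m :: v) 0%nat ->
    (forall k, (k < m)%nat -> exists z, eval f (k :: v) (S z)) ->
    eval (Mu f) v m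
with evals : list prf -> list nat -> list nat -> Prop :=
| evs_nil v : evals [] v []
| evs_cons g gs v w ws : eval g v w -> evals gs v ws -> evals (g :: gs) v (w :: ws).

Definition re_nat (A : nat -> Prop) : Prop :=
  exists c : prf, forall k, A k <-> exists y, eval c [k] y.

(** Goedel numbering of formulas (Cantor pairing), computable and injective. *)
Definition cpair (a b : nat) : nat := (((a + b) * S (a + b)) / 2 + b)%nat.

Definition rcc8_code (r : rcc8) : nat :=
  match r with DC => 0 | EC => 1 | PO => 2 | EQ => 3
  | TPP => 4 | NTPP => 5 | TPPI => 6 | NTPPI => 7 end%nat.

Fixpoint code (phi : form) : nat :=
  match phi with
  | Var k => cpair 0 k
  | Neg a => cpair 1 (code a)
  | And a b => cpair 2 (cpair (code a) (code b))
  | Box r a => cpair 3 (cpair (rcc8_code r) (code a))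
  end.

Definition re_form (L : form -> Prop) : Prop :=
  re_nat (fun k => exists phi, code phi = k /\ L phi).

From Stdlib Require Import Arith Lia Lra List Bool Reals ROrderedType.
From Stdlib Require Import FunctionalExtensionality ProofIrrelevance Classical ClassicalEpsilon.
Import ListNotations.
Open Scope nat_scope.

(** * Mu-recursive functions *)

Fixpoint prf_nested_ind (P : prf -> Prop) (HZ : P Zero) (HS : P Succ)
  (HP : forall i, P (Proj i)) (HC : forall f gs, P f -> Forall P gs -> P (Comp f gs))
  (HR : forall f g, P f -> P g -> P (Prec f g)) (HM : forall f, P f -> P (Mu f))
  (c : prf) : P c :=
  let IH := prf_nested_ind P HZ HS HP HC HR HM in
  match c with
  | Zero => HZ | Succ => HS | Proj i => HP i
  | Comp f gs => HC f gs (IH f)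
      ((fix all (l : list prf) : Forall P l :=
          match l with [] => Forall_nil _ | g :: l' => Forall_cons _ (IH g) (all l') end) gs)
  | Prec f g => HR f g (IH f) (IH g)
  | Mu f => HM f (IH f)
  end.

Lemma eval_functional c v y y' : eval c v y -> eval c v y' -> y = y'.
Proof.
  revert v y y'; induction c as [| | i | f gs IHf IHgs | f g IHf IHg | f IHf]
    using prf_nested_ind; intros v y y' H H'.
  1-3: inversion H; inversion H'; subst; reflexivity.
  - inversion H; inversion H'; subst.
    assert (ws = ws0) as <-; eauto.
    clear -IHgs H2 H8; revert ws ws0 H2 H8.
    induction IHgs; intros ws ws' E E'; inversion E; inversion E'; subst; f_equal; eauto.
  - destruct v as [|x v]; [inversion H|].
    revert y y' H H'; induction x; intros y y' H H'; inversion H; inversion H'; subst; eauto.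
    assert (r = r0) as <-; eauto.
  - inversion H; inversion H'; subst.
    destruct (Nat.lt_total y y') as [Hlt|[|Hlt]]; auto.
    + destruct (H7 y Hlt) as [z Hz]. discriminate (IHf _ _ _ H1 Hz).
    + destruct (H2 y' Hlt) as [z Hz]. discriminate (IHf _ _ _ H6 Hz).
Qed.

Definition computes1 c (f : nat -> nat) := forall x v, eval c (x :: v) (f x).
Definition computes2 c (f : nat -> nat -> nat) := forall x y v, eval c (x :: y :: v) (f x y).
Definition computes3 c (f : nat -> nat -> nat -> nat) :=
  forall x y z v, eval c (x :: y :: z :: v) (f x y z).

Definition recursive f := exists c, computes1 c f.
Definition recursive2 f := exists c, computes2 c f.

Ltac eval_comp := repeat first
  [ apply ev_zero | apply ev_succ | apply ev_proj | eapply ev_comp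
  | apply evs_nil | eapply evs_cons | solve [eauto] ].

Lemma computes1_proj0 : computes1 (Proj 0) (fun x => x).
Proof. intros x v; apply (ev_proj 0). Qed.

Lemma computes2_swap c f : computes2 c f -> computes2 (Comp c [Proj 1; Proj 0]) (fun x y => f y x).
Proof. intros Hc x y v. eval_comp. Qed.

Lemma computes1_diag c f : computes2 c f -> computes1 (Comp c [Proj 0; Proj 0]) (fun x => f x x).
Proof. intros Hc x v. eval_comp. Qed.

Lemma computes2_prec f g b s h : computes1 f b -> computes3 g s ->
  (forall x, h 0 x = b x) -> (forall n x, h (S n) x = s n (h n x) x) ->
  computes2 (Prec f g) h.
Proof.
  intros Hf Hg H0 HS n x v.
  induction n; [rewrite H0; constructor; apply Hf | rewrite HS; econstructor; eauto].
Qed.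

Lemma recursive_pred : recursive pred.
Proof.
  exists (Prec Zero (Proj 0)); intros x v.
  induction x as [|x IH]; [repeat constructor | exact (ev_precS _ _ _ _ _ _ IH (ev_proj 0 _))].
Qed.

Lemma recursive2_add : recursive2 Nat.add.
Proof.
  eexists; apply (computes2_prec (Proj 0) (Comp Succ [Proj 1]) (fun x => x) (fun _ r _ => S r));
    [exact computes1_proj0 | intros ? ? ? ?; eval_comp | reflexivity | reflexivity].
Qed.

Lemma recursive2_sub : recursive2 Nat.sub.
Proof.
  destruct recursive_pred as [cp Hp].
  enough (recursive2 (fun n x => x - n)) as [c Hc] by (eexists; exact (computes2_swap _ _ Hc)).
  eexists; apply (computes2_prec (Proj 0) (Comp cp [Proj 1]) (fun x => x) (fun _ r _ => pred r));
    [exact computes1_proj0 | intros ? ? ? ?; eval_comp | lia | lia].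
Qed.

Lemma recursive2_mul : recursive2 Nat.mul.
Proof.
  destruct recursive2_add as [ca Ha].
  eexists; apply (computes2_prec Zero (Comp ca [Proj 1; Proj 2]) (fun _ => 0) (fun _ r x => r + x));
    [intros ? ?; constructor | intros ? ? ? ?; eval_comp | reflexivity | lia].
Qed.

Lemma computes3_ifz :
  computes3 (Prec (Proj 1) (Proj 2)) (fun b x y => match b with 0 => y | S _ => x end).
Proof.
  intros b x y v; induction b as [|b IH]; [constructor; apply (ev_proj 1)|].
  exact (ev_precS _ _ _ _ _ _ IH (ev_proj 2 _)).
Qed.

Lemma eval_mu f p x v m : computes2 f p -> p m x = 0 -> (forall k, k < m -> p k x <> 0) ->
  eval (Mu f) (x :: v) m.
Proof.
  intros Hf H0 Hk; constructor; [rewrite <- H0; apply Hf|].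
  intros k Hlt; specialize (Hk k Hlt); destruct (p k x) as [|z] eqn:E; [congruence|].
  exists z; rewrite <- E; apply Hf.
Qed.

Lemma recursive_id : recursive (fun x => x).
Proof. exists (Proj 0); exact computes1_proj0. Qed.

Lemma recursive_comp f g : recursive f -> recursive g -> recursive (fun x => f (g x)).
Proof. intros [cf Hf] [cg Hg]; exists (Comp cf [cg]); intros x v; eval_comp. Qed.

Lemma recursive_comp2 h f g : recursive2 h -> recursive f -> recursive g ->
  recursive (fun x => h (f x) (g x)).
Proof. intros [ch Hh] [cf Hf] [cg Hg]; exists (Comp ch [cf; cg]); intros x v; eval_comp. Qed.

Lemma recursive_succ : recursive S.
Proof. exists Succ; intros x v; apply ev_succ. Qed.

Lemma recursive_const c : recursive (fun _ => c).
Proof.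
  induction c; [exists Zero; intros x v; constructor|].
  exact (recursive_comp S _ recursive_succ IHc).
Qed.

Lemma recursive_ifz b f g : recursive b -> recursive f -> recursive g ->
  recursive (fun x => match b x with 0 => g x | S _ => f x end).
Proof.
  intros [cb Hb] [cf Hf] [cg Hg]; pose proof computes3_ifz.
  exists (Comp (Prec (Proj 1) (Proj 2)) [cb; cf; cg]); intros x v; eval_comp.
Qed.

Lemma recursive_iter F N I : recursive F -> recursive N -> recursive I ->
  recursive (fun x => Nat.iter (N x) F (I x)).
Proof.
  intros [cF HF] HN HI; apply (recursive_comp2 (fun n x => Nat.iter n F x)); auto.
  eexists; apply (computes2_prec (Proj 0) (Comp cF [Proj 1]) (fun x => x) (fun _ r _ => F r));
    [exact computes1_proj0 | intros ? ? ? ?; eval_comp | reflexivity | reflexivity].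
Qed.

Fixpoint tri (s : nat) := match s with 0 => 0 | S s' => tri s' + S s' end.

Lemma cpair_tri a b : cpair a b = tri (a + b) + b.
Proof.
  assert (Htri : forall s, 2 * tri s = s * S s) by (induction s; simpl tri; lia).
  unfold cpair; f_equal; rewrite <- Htri, Nat.mul_comm; apply Nat.div_mul; lia.
Qed.

Lemma tri_le_mono a b : a <= b -> tri a <= tri b.
Proof. induction 1; simpl; lia. Qed.

Lemma le_tri s : s <= tri s.
Proof. induction s; simpl; lia. Qed.

Lemma cpair_ge_l a b : a <= cpair a b.
Proof. rewrite cpair_tri; pose proof (le_tri (a + b)); lia. Qed.

Lemma cpair_ge_r a b : b <= cpair a b.
Proof. rewrite cpair_tri; lia. Qed.

Lemma cpair_gt_r a b : 1 <= a -> b < cpair a b.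
Proof. rewrite cpair_tri; pose proof (le_tri (a + b)); lia. Qed.

Fixpoint tri_root (z : nat) : nat :=
  match z with
  | 0 => 0
  | S z' => if tri (S (tri_root z')) <=? S z' then S (tri_root z') else tri_root z'
  end.

Lemma tri_root_spec z : tri (tri_root z) <= z < tri (S (tri_root z)).
Proof.
  induction z; simpl; [lia|].
  destruct (Nat.leb_spec (tri (tri_root z) + S (tri_root z)) (S z)); simpl in *; lia.
Qed.

Lemma tri_root_unique z s : tri s <= z < tri (S s) -> tri_root z = s.
Proof.
  intros H; pose proof (tri_root_spec z).
  destruct (Nat.lt_total (tri_root z) s) as [l|[|l]]; auto; apply tri_le_mono in l; simpl in *; lia.
Qed.

Definition csnd z := z - tri (tri_root z).
Definition cfst z := tri_root z - csnd z.

Lemma cfst_csnd_cpair a b : cfst (cpair a b) = a /\ csnd (cpair a b) = b.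
Proof.
  rewrite cpair_tri; assert (tri_root (tri (a + b) + b) = a + b) as E
    by (apply tri_root_unique; simpl; lia).
  unfold cfst, csnd; rewrite E; lia.
Qed.

Lemma cfst_cpair a b : cfst (cpair a b) = a.
Proof. apply cfst_csnd_cpair. Qed.

Lemma csnd_cpair a b : csnd (cpair a b) = b.
Proof. apply cfst_csnd_cpair. Qed.

Lemma cpair_cfst_csnd z : cpair (cfst z) (csnd z) = z.
Proof.
  pose proof (tri_root_spec z); rewrite cpair_tri; unfold cfst, csnd in *; simpl in *.
  replace (tri_root z - (z - tri (tri_root z)) + (z - tri (tri_root z))) with (tri_root z); lia.
Qed.

Lemma recursive_tri : recursive tri.
Proof.
  destruct recursive2_add as [ca Ha].
  enough (recursive2 (fun n _ => tri n)) as [c Hc] by (eexists; exact (computes1_diag _ _ Hc)).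
  eexists; apply (computes2_prec Zero (Comp ca [Proj 1; Comp Succ [Proj 0]]) (fun _ => 0)
    (fun m r _ => r + S m)); [intros ? ?; constructor | intros ? ? ? ?; eval_comp | reflexivity | reflexivity].
Qed.

Lemma recursive2_cpair : recursive2 cpair.
Proof.
  destruct recursive2_add as [ca Ha], recursive_tri as [ct Ht].
  exists (Comp ca [Comp ct [ca]; Proj 1]); intros x y v; rewrite cpair_tri; eval_comp.
Qed.

(* [tri_root z] is the least [s] with [z < tri (S s)]. *)
Lemma recursive_tri_root : recursive tri_root.
Proof.
  destruct recursive2_sub as [cs Hs], recursive_tri as [ct Ht].
  set (c := Comp cs [Comp Succ [Proj 1]; Comp ct [Comp Succ [Proj 0]]]).
  assert (Hc : computes2 c (fun s z => S z - tri (S s))) by (intros ? ? ?; eval_comp).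
  exists (Mu c); intros z v; pose proof (tri_root_spec z).
  apply (eval_mu _ _ _ _ _ Hc); [cbn [tri] in *; lia|].
  intros k Hk; apply (tri_le_mono (S k)) in Hk; cbn [tri] in *; lia.
Qed.

Lemma recursive_csnd : recursive csnd.
Proof.
  apply (recursive_comp2 Nat.sub); [apply recursive2_sub | apply recursive_id |].
  apply recursive_comp; [apply recursive_tri | apply recursive_tri_root].
Qed.

Lemma recursive_cfst : recursive cfst.
Proof.
  apply (recursive_comp2 Nat.sub); [apply recursive2_sub | apply recursive_tri_root | apply recursive_csnd].
Qed.

Lemma recursive_ext f g : (forall x, f x = g x) -> recursive f -> recursive g.
Proof. intros E [c Hc]; exists c; intros x v; rewrite <- E; apply Hc. Qed.

Lemma recursive_iter_env F N I : recursive (fun p => F (cfst p) (csnd p)) ->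
  recursive N -> recursive I -> recursive (fun x => Nat.iter (N x) (F x) (I x)).
Proof.
  intros HF HN HI; set (G := fun p => cpair (cfst p) (F (cfst p) (csnd p))).
  assert (HG : forall x n s, Nat.iter n G (cpair x s) = cpair x (Nat.iter n (F x) s)).
  { intros x n s; induction n; simpl; auto.
    rewrite IHn; unfold G; rewrite cfst_cpair, csnd_cpair; reflexivity. }
  apply (recursive_ext (fun x => csnd (Nat.iter (N x) G (cpair x (I x))))).
  { intros x; rewrite HG; apply csnd_cpair. }
  apply recursive_comp; [apply recursive_csnd|].
  apply recursive_iter; auto; [|apply (recursive_comp2 cpair); auto using recursive2_cpair, recursive_id].
  apply (recursive_comp2 cpair); auto using recursive2_cpair, recursive_cfst.
Qed.

Lemma re_nat_of_recursive_search (A : nat -> Prop) (R : nat -> nat) : recursive R ->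
  (forall k, A k <-> exists d, R (cpair d k) = 0) -> re_nat A.
Proof.
  intros [cR HR] HA; destruct recursive2_cpair as [cp Hp].
  set (c := Comp cR [Comp cp [Proj 0; Proj 1]]).
  assert (Hc : computes2 c (fun d k => R (cpair d k))) by (intros ? ? ?; eval_comp).
  exists (Mu c); intros k; rewrite HA; split.
  - intros Hex.
    destruct (dec_inh_nat_subset_has_unique_least_element (fun d => R (cpair d k) = 0))
      as [m [[Hm Hmin] _]]; [intros d; destruct (Nat.eq_dec (R (cpair d k)) 0); auto | exact Hex |].
    exists m; apply (eval_mu _ _ _ _ _ Hc Hm); intros j Hj E; specialize (Hmin j E); lia.
  - intros [y Hy]; inversion Hy as [| | | | | | ? ? ? Hzero _]; subst.
    exists y; exact (eval_functional _ _ _ _ (Hc y k []) Hzero).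
Qed.

Class Enc (A : Type) := enc : A -> nat.

#[export] Instance enc_nat : Enc nat := fun n => n.
#[export] Instance enc_bool : Enc bool := fun b => if b then 1 else 0.
#[export] Instance enc_prod {A B} `{Enc A} `{Enc B} : Enc (A * B) :=
  fun p => cpair (enc (fst p)) (enc (snd p)).
Fixpoint enc_list_fix {A} `{Enc A} (l : list A) : nat :=
  match l with [] => 0 | a :: l' => S (cpair (enc a) (enc_list_fix l')) end.
#[export] Instance enc_list {A} `{Enc A} : Enc (list A) := enc_list_fix.

Definition computable {A B} `{Enc A} `{Enc B} (f : A -> B) :=
  exists g, recursive g /\ forall a, g (enc a) = enc (f a).

Section Closure.
Context {A B C : Type} `{Enc A} `{Enc B} `{Enc C}.

Lemma computable_ext (f g : A -> B) : (forall x, f x = g x) -> computable f -> computable g.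
Proof. intros E [h [Hh Eh]]; exists h; split; auto; intros a; rewrite Eh, E; reflexivity. Qed.

Lemma computable_const (b : B) : computable (fun _ : A => b).
Proof. exists (fun _ => enc b); split; auto using recursive_const. Qed.

Lemma computable_id : computable (fun x : A => x).
Proof. exists (fun x => x); split; auto using recursive_id. Qed.

Lemma computable_comp (f : A -> B) (g : B -> C) :
  computable f -> computable g -> computable (fun x => g (f x)).
Proof.
  intros [f' [Hf Ef]] [g' [Hg Eg]]; exists (fun x => g' (f' x)).
  split; [apply recursive_comp; auto | intros; rewrite Ef, Eg; reflexivity].
Qed.

Lemma computable_pair (f : A -> B) (g : A -> C) :
  computable f -> computable g -> computable (fun x => (f x, g x)).
Proof.
  intros [f' [Hf Ef]] [g' [Hg Eg]]; exists (fun x => cpair (f' x) (g' x)).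
  split; [apply recursive_comp2; auto using recursive2_cpair | intros; rewrite Ef, Eg; reflexivity].
Qed.

Lemma computable_fst : computable (fun p : A * B => fst p).
Proof.
  exists cfst; split; [apply recursive_cfst | intros; apply cfst_cpair].
Qed.

Lemma computable_snd : computable (fun p : A * B => snd p).
Proof.
  exists csnd; split; [apply recursive_csnd | intros; apply csnd_cpair].
Qed.

Lemma computable_if (c : A -> bool) (f g : A -> B) :
  computable c -> computable f -> computable g -> computable (fun x => if c x then f x else g x).
Proof.
  intros [c' [Hc Ec]] [f' [Hf Ef]] [g' [Hg Eg]].
  exists (fun x => match c' x with 0 => g' x | S _ => f' x end).
  split; [apply recursive_ifz; auto | intros a; rewrite Ec; destruct (c a); simpl; auto].
Qed.

End Closure.

Lemma computable_app2 {A B C D} `{Enc A} `{Enc B} `{Enc C} `{Enc D} (g : B -> C -> D) (f1 : A -> B) (f2 : A -> C) :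
  computable (fun p : B * C => g (fst p) (snd p)) -> computable f1 -> computable f2 ->
  computable (fun x => g (f1 x) (f2 x)).
Proof.
  intros Hg Hf1 Hf2.
  exact (computable_comp (fun x => (f1 x, f2 x)) (fun p => g (fst p) (snd p))
    (computable_pair f1 f2 Hf1 Hf2) Hg).
Qed.

Lemma computable_app3 {A B C D E} `{Enc A} `{Enc B} `{Enc C} `{Enc D} `{Enc E}
  (g : B -> C -> D -> E) (f1 : A -> B) (f2 : A -> C) (f3 : A -> D) :
  computable (fun p : B * (C * D) => g (fst p) (fst (snd p)) (snd (snd p))) ->
  computable f1 -> computable f2 -> computable f3 -> computable (fun x => g (f1 x) (f2 x) (f3 x)).
Proof.
  intros Hg Hf1 Hf2 Hf3.
  exact (computable_comp (fun x => (f1 x, (f2 x, f3 x))) _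
    (computable_pair _ _ Hf1 (computable_pair _ _ Hf2 Hf3)) Hg).
Qed.

Lemma computable_nat1 (h : nat -> nat) : recursive h -> computable h.
Proof. intros Hh; exists h; split; auto. Qed.

Lemma computable_nat2 (h : nat -> nat -> nat) :
  recursive2 h -> computable (fun p : nat * nat => h (fst p) (snd p)).
Proof.
  intros Hh; exists (fun p => h (cfst p) (csnd p)); split.
  - apply recursive_comp2; auto using recursive_cfst, recursive_csnd.
  - intros [a b]; change (h (cfst (cpair a b)) (csnd (cpair a b)) = h a b).
    rewrite cfst_cpair, csnd_cpair; reflexivity.
Qed.

Lemma computable_S : computable S.
Proof. apply computable_nat1, recursive_succ. Qed.

Lemma computable_add : computable (fun p : nat * nat => fst p + snd p).
Proof. apply computable_nat2, recursive2_add. Qed.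

Lemma computable_sub : computable (fun p : nat * nat => fst p - snd p).
Proof. apply computable_nat2, recursive2_sub. Qed.

Lemma computable_mul : computable (fun p : nat * nat => fst p * snd p).
Proof. apply computable_nat2, recursive2_mul. Qed.

Lemma computable_cfst : computable cfst.
Proof. apply computable_nat1, recursive_cfst. Qed.

Lemma computable_csnd : computable csnd.
Proof. apply computable_nat1, recursive_csnd. Qed.

Lemma computable_leb : computable (fun p : nat * nat => fst p <=? snd p).
Proof.
  destruct computable_sub as [s [Hs Es]].
  exists (fun x => match s x with 0 => 1 | S _ => 0 end); split.
  - apply recursive_ifz; auto using recursive_const.
  - intros [a b]; rewrite (Es (a, b)); unfold enc, enc_nat, enc_bool; cbn [fst snd].
    destruct (Nat.leb_spec a b); [replace (a - b) with 0 by lia | destruct (a - b) eqn:E; [lia|]];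
      reflexivity.
Qed.

Lemma computable_iter {A B} `{Enc A} `{Enc B} (N : A -> nat) (F : A -> B -> B) (I : A -> B) :
  computable (fun p : A * B => F (fst p) (snd p)) -> computable N -> computable I ->
  computable (fun x => Nat.iter (N x) (F x) (I x)).
Proof.
  intros [F' [HF EF]] [N' [HN EN]] [I' [HI EI]].
  exists (fun x => Nat.iter (N' x) (fun s => F' (cpair x s)) (I' x)); split.
  - apply (recursive_iter_env (fun x s => F' (cpair x s))); auto.
    apply (recursive_ext F'); auto; intros p; rewrite cpair_cfst_csnd; reflexivity.
  - intros a; rewrite EN, EI; change (enc (N a)) with (N a).
    induction (N a); simpl; [reflexivity|]; rewrite IHn; apply (EF (a, _)).
Qed.

(* One step of [fold_left] on an encoded state [cpair e (cpair l acc)], for an encoded step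
   function [F'] acting on [cpair e (cpair acc a)]. *)
Definition fold_step (F' : nat -> nat) (s : nat) : nat :=
  match cfst (csnd s) with
  | 0 => s
  | S _ => cpair (cfst s) (cpair (csnd (pred (cfst (csnd s))))
             (F' (cpair (cfst s) (cpair (csnd (csnd s)) (cfst (pred (cfst (csnd s))))))))
  end.

Lemma recursive_fold_step F' : recursive F' -> recursive (fold_step F').
Proof.
  intros HF; unfold fold_step.
  pose proof recursive_cfst; pose proof recursive_csnd; pose proof recursive_pred.
  repeat first
    [ assumption | apply recursive_id
    | match goal with
      | |- recursive (fun x => match @?b x with 0 => @?g x | S _ => @?f x end) =>
          apply (recursive_ifz b f g)
      | |- recursive (fun x => cpair (@?f x) (@?g x)) =>
          apply (recursive_comp2 cpair f g recursive2_cpair)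
      | H : recursive ?h |- recursive (fun x => ?h (@?f x)) => apply (recursive_comp h f H)
      end ].
Qed.

Lemma iter_fold_step {E A B} `{Enc E} `{Enc A} `{Enc B} (F : E -> B -> A -> B) F' :
  (forall t : E * (B * A), F' (enc t) = enc (F (fst t) (fst (snd t)) (snd (snd t)))) ->
  forall e l acc m, length l <= m ->
  Nat.iter m (fold_step F') (cpair (enc e) (cpair (enc l) (enc acc)))
  = cpair (enc e) (cpair 0 (enc (fold_left (F e) l acc))).
Proof.
  intros EF e l; induction l as [|a l IH]; intros acc m Hm.
  - induction m; simpl; [reflexivity|].
    rewrite IHm by (simpl; lia); unfold fold_step; rewrite csnd_cpair, cfst_cpair; reflexivity.
  - destruct m; simpl in Hm; [lia|]; rewrite Nat.iter_succ_r.
    unfold fold_step at 2; rewrite !csnd_cpair, !cfst_cpair.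
    change (enc (a :: l)) with (S (cpair (enc a) (enc l))); simpl pred.
    rewrite !csnd_cpair, !cfst_cpair.
    change (cpair (enc e) (cpair (enc acc) (enc a))) with (enc (e, (acc, a))).
    rewrite EF; apply IH; lia.
Qed.

Lemma length_le_enc {A} `{Enc A} (l : list A) : length l <= enc l.
Proof.
  induction l; simpl; [lia|].
  change (enc (a :: l)) with (S (cpair (enc a) (enc l))); pose proof (cpair_ge_r (enc a) (enc l)); lia.
Qed.

Lemma computable_fold {E A B} `{Enc E} `{Enc A} `{Enc B}
  (F : E -> B -> A -> B) (L : E -> list A) (I : E -> B) :
  computable (fun t : E * (B * A) => F (fst t) (fst (snd t)) (snd (snd t))) ->
  computable L -> computable I -> computable (fun e => fold_left (F e) (L e) (I e)).
Proof.
  intros [F' [HF EF]] [L' [HL EL]] [I' [HI EI]].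
  exists (fun x => csnd (csnd (Nat.iter (L' x) (fold_step F') (cpair x (cpair (L' x) (I' x)))))).
  split.
  - apply recursive_comp; [apply recursive_csnd|]; apply recursive_comp; [apply recursive_csnd|].
    apply recursive_iter; auto using recursive_fold_step.
    repeat apply (recursive_comp2 cpair); auto using recursive2_cpair, recursive_id.
  - intros e; rewrite EL, EI, (iter_fold_step F F' EF) by apply length_le_enc.
    rewrite !csnd_cpair; reflexivity.
Qed.

Create HintDb computable discriminated.
#[export] Hint Resolve computable_fst computable_snd computable_S computable_add computable_sub
  computable_mul computable_cfst computable_csnd computable_leb : computable.

Ltac computable_core_step :=
  cbv beta zeta; first
  [ assumption
  | match goal with
    | |- computable (fun x => x) => apply computable_id
    | |- computable (fun x => ?c) => apply computable_const
    | |- computable (fun x => (@?f x, @?g x)) => apply (computable_pair f g)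
    | |- computable (fun x => if @?c x then @?f x else @?g x) => apply (computable_if c f g)
    | |- computable (fun x => Nat.iter (@?N x) (@?F x) (@?I x)) => apply (computable_iter N F I)
    | |- computable (fun x => fold_left (@?F x) (@?L x) (@?I x)) => apply (computable_fold F L I)
    | |- computable (fun x => ?g (@?f1 x) (@?f2 x) (@?f3 x)) =>
        apply (computable_app3 g f1 f2 f3); [solve [auto with computable] | | |]
    | |- computable (fun x => ?g (@?f1 x) (@?f2 x)) =>
        apply (computable_app2 g f1 f2); [solve [auto with computable] | |]
    | |- computable (fun x => ?g (@?f x)) =>
        apply (computable_comp f g); [| solve [auto with computable]]
    | |- computable ?f =>
        lazymatch f with (fun _ => _) => fail | _ => change (computable (fun x => f x)) end
    end ].

Lemma computable_negb : computable negb.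
Proof.
  apply (computable_ext (fun b : bool => if b then false else true)); [now intros []|].
  repeat computable_core_step.
Qed.

#[export] Hint Resolve computable_negb : computable.

Ltac computable_by f :=
  apply (computable_ext f); [intros [[] []]; reflexivity | repeat computable_core_step].

Lemma computable_andb : computable (fun p : bool * bool => fst p && snd p).
Proof. computable_by (fun p : bool * bool => if fst p then snd p else false). Qed.

Lemma computable_orb : computable (fun p : bool * bool => fst p || snd p).
Proof. computable_by (fun p : bool * bool => if fst p then true else snd p). Qed.

Lemma computable_implb : computable (fun p : bool * bool => implb (fst p) (snd p)).
Proof. computable_by (fun p : bool * bool => if fst p then snd p else true). Qed.

Lemma computable_eqb_bool : computable (fun p : bool * bool => Bool.eqb (fst p) (snd p)).
Proof. computable_by (fun p : bool * bool => if fst p then snd p else negb (snd p)). Qed.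

Lemma computable_ltb : computable (fun p : nat * nat => fst p <? snd p).
Proof. apply (computable_ext (fun p : nat * nat => S (fst p) <=? snd p)); [reflexivity | repeat computable_core_step]. Qed.

#[export] Hint Resolve computable_andb computable_orb computable_implb
  computable_eqb_bool computable_ltb : computable.

Lemma computable_eqb : computable (fun p : nat * nat => fst p =? snd p).
Proof.
  apply (computable_ext (fun p : nat * nat => (fst p <=? snd p) && (snd p <=? fst p))).
  - intros [a b]; simpl; destruct (Nat.eqb_spec a b), (Nat.leb_spec a b), (Nat.leb_spec b a);
      reflexivity || lia.
  - repeat computable_core_step.
Qed.

Lemma computable_max : computable (fun p : nat * nat => Nat.max (fst p) (snd p)).
Proof.
  apply (computable_ext (fun p : nat * nat => if fst p <=? snd p then snd p else fst p)).
  - intros [a b]; simpl; destruct (Nat.leb_spec a b); lia.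
  - repeat computable_core_step.
Qed.

#[export] Hint Resolve computable_eqb computable_max : computable.

Section Lists.
Context {E A B : Type} `{Enc E} `{Enc A} `{Enc B}.

Lemma computable_cons : computable (fun p : A * list A => fst p :: snd p).
Proof. exists S; split; [apply recursive_succ | reflexivity]. Qed.

Lemma computable_tl : computable (fun l : list A => tl l).
Proof.
  exists (fun z => csnd (pred z)); split.
  - apply recursive_comp; [apply recursive_csnd | apply recursive_pred].
  - intros [|a l]; [reflexivity|]; apply csnd_cpair.
Qed.

Lemma computable_hd : computable (fun p : A * list A => hd (fst p) (snd p)).
Proof.
  exists (fun z => match csnd z with 0 => cfst z | S _ => cfst (pred (csnd z)) end); split.
  - apply recursive_ifz; [apply recursive_csnd | | apply recursive_cfst].
    apply (recursive_comp cfst); [apply recursive_cfst|].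
    apply (recursive_comp pred); [apply recursive_pred | apply recursive_csnd].
  - intros [d l]; change (enc (d, l)) with (cpair (enc d) (enc l)); rewrite csnd_cpair.
    destruct l as [|a l]; [apply cfst_cpair|].
    change (cfst (cpair (enc a) (enc l)) = enc a); apply cfst_cpair.
Qed.

End Lists.

#[export] Hint Resolve computable_cons computable_tl computable_hd : computable.

Lemma fold_left_cons_rev {A} (l acc : list A) :
  fold_left (fun acc a => a :: acc) l acc = rev l ++ acc.
Proof. revert acc; induction l; intros; simpl; [|rewrite IHl, <- app_assoc]; reflexivity. Qed.

Lemma nth_iter_tl {A} (l : list A) i d : nth i l d = hd d (Nat.iter i (@tl A) l).
Proof.
  revert l; induction i as [|i IH]; intros l; [destruct l; reflexivity|].
  rewrite Nat.iter_succ_r; destruct l as [|a l]; [|apply IH].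
  simpl tl; rewrite <- IH; destruct i; reflexivity.
Qed.

Section DerivedLists.
Context {E A B : Type} `{Enc E} `{Enc A} `{Enc B}.

Lemma computable_rev : computable (fun l : list A => rev l).
Proof.
  apply (computable_ext (fun l : list A => fold_left (fun acc a => a :: acc) l []));
    [intros; rewrite fold_left_cons_rev, app_nil_r; reflexivity | repeat computable_core_step].
Qed.

Lemma computable_app : computable (fun p : list A * list A => fst p ++ snd p).
Proof.
  pose proof computable_rev.
  apply (computable_ext (fun p : list A * list A => fold_left (fun acc a => a :: acc) (rev (fst p)) (snd p)));
    [intros; rewrite fold_left_cons_rev, rev_involutive; reflexivity | repeat computable_core_step].
Qed.

Lemma computable_length : computable (fun l : list A => length l).
Proof.
  apply (computable_ext (fun l : list A => fold_left (fun n _ => S n) l 0)).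
  - intros l; rewrite fold_left_S_0; lia.
  - repeat computable_core_step.
Qed.

Lemma computable_nth : computable (fun p : nat * (list A * A) => nth (fst p) (fst (snd p)) (snd (snd p))).
Proof.
  apply (computable_ext (fun p : nat * (list A * A) =>
    hd (snd (snd p)) (Nat.iter (fst p) (fun l => tl l) (fst (snd p))))).
  - intros [i [l d]]; simpl; symmetry; apply nth_iter_tl.
  - repeat computable_core_step.
Qed.

End DerivedLists.

#[export] Hint Resolve computable_rev computable_app computable_length computable_nth : computable.

Lemma computable_seq : computable (fun p : nat * nat => seq (fst p) (snd p)).
Proof.
  apply (computable_ext (fun p : nat * nat =>
    rev (snd (Nat.iter (snd p) (fun q : nat * list nat => (S (fst q), fst q :: snd q)) (fst p, []))))).
  - intros [a m]; simpl.
    assert (Nat.iter m (fun q : nat * list nat => (S (fst q), fst q :: snd q)) (a, [])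
      = (a + m, rev (seq a m))) as ->; [|apply rev_involutive].
    induction m; [simpl; f_equal; lia|].
    rewrite Nat.iter_succ, IHm, seq_S, rev_app_distr; simpl; f_equal; lia.
  - repeat computable_core_step.
Qed.

#[export] Hint Resolve computable_seq : computable.

Section HigherOrderLists.
Context {E A B : Type} `{Enc E} `{Enc A} `{Enc B}.

Lemma computable_map (F : E -> A -> B) (L : E -> list A) :
  computable (fun p : E * A => F (fst p) (snd p)) -> computable L ->
  computable (fun e => map (F e) (L e)).
Proof.
  intros HF HL.
  apply (computable_ext (fun e => rev (fold_left (fun acc a => F e a :: acc) (L e) []))).
  - intros e; assert (forall l acc, fold_left (fun acc a => F e a :: acc) l acc = rev (map (F e) l) ++ acc)
      as -> by (induction l; intros; simpl; [|rewrite IHl, <- app_assoc]; reflexivity).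
    rewrite app_nil_r; apply rev_involutive.
  - repeat computable_core_step.
Qed.

Lemma computable_flat_map (F : E -> A -> list B) (L : E -> list A) :
  computable (fun p : E * A => F (fst p) (snd p)) -> computable L ->
  computable (fun e => flat_map (F e) (L e)).
Proof.
  intros HF HL.
  apply (computable_ext (fun e => fold_left (fun acc a => acc ++ F e a) (L e) [])).
  - intros e; assert (forall l acc, fold_left (fun acc a => acc ++ F e a) l acc = acc ++ flat_map (F e) l)
      as -> by (induction l; intros; simpl; [|rewrite IHl, <- app_assoc]; auto using app_nil_r).
    reflexivity.
  - repeat computable_core_step.
Qed.

Lemma computable_filter (F : E -> A -> bool) (L : E -> list A) :
  computable (fun p : E * A => F (fst p) (snd p)) -> computable L ->
  computable (fun e => filter (F e) (L e)).
Proof.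
  intros HF HL.
  apply (computable_ext (fun e => rev (fold_left (fun acc a => if F e a then a :: acc else acc) (L e) []))).
  - intros e; assert (forall l acc, fold_left (fun acc a => if F e a then a :: acc else acc) l acc
      = rev (filter (F e) l) ++ acc) as ->.
    { induction l; intros; simpl; [reflexivity|].
      destruct (F e a); simpl; rewrite IHl; [rewrite <- app_assoc|]; reflexivity. }
    rewrite app_nil_r; apply rev_involutive.
  - repeat computable_core_step.
Qed.

Lemma computable_existsb (F : E -> A -> bool) (L : E -> list A) :
  computable (fun p : E * A => F (fst p) (snd p)) -> computable L ->
  computable (fun e => existsb (F e) (L e)).
Proof.
  intros HF HL; apply (computable_ext (fun e => fold_left (fun b a => b || F e a) (L e) false)).
  - intros e; assert (forall l b, fold_left (fun b a => b || F e a) l b = b || existsb (F e) l)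
      as -> by (induction l; intros; simpl; [|rewrite IHl, orb_assoc]; auto using orb_false_r).
    reflexivity.
  - repeat computable_core_step.
Qed.

Lemma computable_forallb (F : E -> A -> bool) (L : E -> list A) :
  computable (fun p : E * A => F (fst p) (snd p)) -> computable L ->
  computable (fun e => forallb (F e) (L e)).
Proof.
  intros HF HL; apply (computable_ext (fun e => fold_left (fun b a => b && F e a) (L e) true)).
  - intros e; assert (forall l b, fold_left (fun b a => b && F e a) l b = b && forallb (F e) l)
      as -> by (induction l; intros; simpl; [|rewrite IHl, andb_assoc]; auto using andb_true_r).
    reflexivity.
  - repeat computable_core_step.
Qed.

End HigherOrderLists.

Ltac computable_step :=
  cbv beta zeta; first
  [ match goal with
    | |- computable (fun x => map (@?F x) (@?L x)) => apply (computable_map F L)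
    | |- computable (fun x => flat_map (@?F x) (@?L x)) => apply (computable_flat_map F L)
    | |- computable (fun x => filter (@?F x) (@?L x)) => apply (computable_filter F L)
    | |- computable (fun x => existsb (@?F x) (@?L x)) => apply (computable_existsb F L)
    | |- computable (fun x => forallb (@?F x) (@?L x)) => apply (computable_forallb F L)
    end
  | computable_core_step ].

Ltac computable_auto := repeat computable_step.


Lemma re_nat_of_computable_search (A : nat -> Prop) (b : nat -> nat -> bool) :
  computable (fun p : nat * nat => b (fst p) (snd p)) ->
  (forall k, A k <-> exists d, b d k = true) -> re_nat A.
Proof.
  intros [g [Hg Eg]] HA; apply (re_nat_of_recursive_search A (fun z => 1 - g z)).
  - apply (recursive_comp2 Nat.sub); auto using recursive2_sub, recursive_const.
  - intros k; rewrite HA; apply Morphisms_Prop.ex_iff_morphism; intros d.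
    change (cpair d k) with (enc (d, k)); rewrite Eg; unfold enc, enc_bool; simpl.
    destruct (b d k); split; congruence.
Qed.

Section Rectangles.
Local Open Scope R_scope.
Context {n : nat}.

Lemma exists_pos_lower_bound (f : coord n -> R) :
  (forall i, 0 < f i) -> exists e, 0 < e /\ forall i, e <= f i.
Proof.
  intros Hf.
  enough (forall m, exists e, 0 < e /\ forall i : coord n, (proj1_sig i < m)%nat -> e <= f i)
    as Hm by (destruct (Hm n) as [e [He Hle]]; exists e; split; auto; intros [i Hi]; apply Hle, Hi).
  induction m as [|m [e [He Hle]]]; [exists 1; split; [lra | intros [i Hi]; simpl; lia]|].
  destruct (lt_dec m n) as [Hmn|Hmn].
  - exists (Rmin e (f (exist _ m Hmn))); split; [apply Rmin_glb_lt; auto|].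
    intros [i Hi] Him; simpl in Him; destruct (Nat.eq_dec i m) as [->|Hne].
    + rewrite (proof_irrelevance _ Hi Hmn); apply Rmin_r.
    + eapply Rle_trans; [apply Rmin_l | apply Hle; simpl; lia].
  - exists e; split; auto; intros [i Hi] Him; apply Hle; simpl in *; lia.
Qed.

Definition shift (x : point n) (i : coord n) (d : R) : point n :=
  fun j => if Nat.eq_dec (proj1_sig j) (proj1_sig i) then x j + d else x j.

Lemma shift_close x i d e : Rabs d < e -> 0 < e -> forall j, Rabs (shift x i d j - x j) < e.
Proof.
  intros Hd He j; unfold shift; destruct (Nat.eq_dec _ _).
  - replace (x j + d - x j) with d by ring; exact Hd.
  - rewrite Rminus_diag, Rabs_R0; exact He.
Qed.

Lemma shift_at x i d : shift x i d i = x i + d.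
Proof. unfold shift; destruct (Nat.eq_dec _ _); [reflexivity | congruence]. Qed.

Lemma interior_region_iff (t : rect n) x :
  interior (region t) x <-> forall i, lo t i < x i < hi t i.
Proof.
  split.
  - intros [e [He Hball]] i.
    assert (Hhalf : Rabs (e / 2) < e) by (rewrite Rabs_right; lra).
    assert (Hdown := Hball _ (shift_close x i (- (e / 2)) e ltac:(rewrite Rabs_Ropp; exact Hhalf) He) i).
    assert (Hup := Hball _ (shift_close x i (e / 2) e Hhalf He) i).
    rewrite shift_at in Hdown, Hup; lra.
  - intros Hx.
    destruct (exists_pos_lower_bound (fun i => Rmin (x i - lo t i) (hi t i - x i))) as [e [He Hle]].
    { intros i; specialize (Hx i); apply Rmin_glb_lt; lra. }
    exists e; split; auto; intros y Hy i; specialize (Hy i); specialize (Hle i).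
    apply Rabs_def2 in Hy; pose proof (Rmin_l (x i - lo t i) (hi t i - x i));
      pose proof (Rmin_r (x i - lo t i) (hi t i - x i)); lra.
Qed.

Lemma lo_region (s : rect n) : region s (lo s).
Proof. intros i; pose proof (lo_lt_hi _ s i); lra. Qed.

Lemma hi_region (s : rect n) : region s (hi s).
Proof. intros i; pose proof (lo_lt_hi _ s i); lra. Qed.

Lemma meets_region_iff (s t : rect n) :
  meets (region s) (region t) <-> forall i, lo s i <= hi t i /\ lo t i <= hi s i.
Proof.
  split; [intros [x [Hs Ht]] i; specialize (Hs i); specialize (Ht i); lra|].
  intros H; exists (fun i => Rmax (lo s i) (lo t i)); split; intros i; specialize (H i);
    pose proof (lo_lt_hi _ s i); pose proof (lo_lt_hi _ t i);
    pose proof (Rmax_l (lo s i) (lo t i)); pose proof (Rmax_r (lo s i) (lo t i));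
    split; auto; apply Rmax_lub; lra.
Qed.

Lemma meets_interior_iff (s t : rect n) :
  meets (interior (region s)) (interior (region t)) <-> forall i, lo s i < hi t i /\ lo t i < hi s i.
Proof.
  split.
  - intros [x [Hs Ht]] i; rewrite interior_region_iff in Hs, Ht.
    specialize (Hs i); specialize (Ht i); lra.
  - intros H; exists (fun i => (Rmax (lo s i) (lo t i) + Rmin (hi s i) (hi t i)) / 2).
    assert (Hlt : forall i, Rmax (lo s i) (lo t i) < Rmin (hi s i) (hi t i)).
    { intros i; specialize (H i); pose proof (lo_lt_hi _ s i); pose proof (lo_lt_hi _ t i).
      apply Rmax_lub_lt; apply Rmin_glb_lt; lra. }
    split; rewrite interior_region_iff; intros i; specialize (Hlt i);
      pose proof (Rmax_l (lo s i) (lo t i)); pose proof (Rmax_r (lo s i) (lo t i));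
      pose proof (Rmin_l (hi s i) (hi t i)); pose proof (Rmin_r (hi s i) (hi t i)); lra.
Qed.

Lemma subset_region_iff (s t : rect n) :
  subset (region s) (region t) <-> forall i, lo t i <= lo s i /\ hi s i <= hi t i.
Proof.
  split; [|intros H x Hx i; specialize (H i); specialize (Hx i); lra].
  intros H i; split; [apply (H _ (lo_region s) i) | apply (H _ (hi_region s) i)].
Qed.

Lemma subset_interior_iff (s t : rect n) :
  subset (region s) (interior (region t)) <-> forall i, lo t i < lo s i /\ hi s i < hi t i.
Proof.
  split.
  - intros H i; pose proof (proj1 (interior_region_iff t _) (H _ (lo_region s)) i);
      pose proof (proj1 (interior_region_iff t _) (H _ (hi_region s)) i); lra.
  - intros H x Hx; apply interior_region_iff; intros i; specialize (H i); specialize (Hx i); lra.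
Qed.

Lemma seteq_region_iff (s t : rect n) :
  seteq (region s) (region t) <-> forall i, lo s i = lo t i /\ hi s i = hi t i.
Proof.
  split.
  - intros H i; pose proof (proj1 (subset_region_iff s t) (fun x => proj1 (H x)) i);
      pose proof (proj1 (subset_region_iff t s) (fun x => proj2 (H x)) i); lra.
  - intros H x; split; intros Hx i; specialize (H i); specialize (Hx i); lra.
Qed.

Lemma rect_ext (s t : rect n) : (forall i, lo s i = lo t i /\ hi s i = hi t i) -> s = t.
Proof.
  destruct s as [ls hs Hs], t as [lt ht Ht]; simpl; intros H.
  assert (ls = lt) as <- by (apply functional_extensionality; apply H).
  assert (hs = ht) as <- by (apply functional_extensionality; apply H).
  f_equal; apply proof_irrelevance.
Qed.
End Rectangles.

(** * The refutation search *)

Notation irect := (list (nat * nat)).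
Notation node := (irect * list bool)%type.
Notation config := (list node).
Definition dnode : node := ([], []).

Definition ilo (R : irect) i := fst (nth i R (0, 0)).
Definition ihi (R : irect) i := snd (nth i R (0, 0)).

Definition meetsb n (R S : irect) :=
  forallb (fun i => (ilo R i <=? ihi S i) && (ilo S i <=? ihi R i)) (seq 0 n).
Definition imeetsb n (R S : irect) :=
  forallb (fun i => (ilo R i <? ihi S i) && (ilo S i <? ihi R i)) (seq 0 n).
Definition subb n (R S : irect) :=
  forallb (fun i => (ilo S i <=? ilo R i) && (ihi R i <=? ihi S i)) (seq 0 n).
Definition isubb n (R S : irect) :=
  forallb (fun i => (ilo S i <? ilo R i) && (ihi R i <? ihi S i)) (seq 0 n).
Definition eqrb n (R S : irect) :=
  forallb (fun i => (ilo R i =? ilo S i) && (ihi R i =? ihi S i)) (seq 0 n).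

Definition relb n r (R S : irect) :=
  if r =? 0 then negb (meetsb n R S)
  else if r =? 1 then negb (imeetsb n R S) && meetsb n R S
  else if r =? 2 then imeetsb n R S && negb (subb n R S) && negb (subb n S R)
  else if r =? 3 then eqrb n R S
  else if r =? 4 then subb n R S && negb (isubb n R S) && negb (eqrb n R S)
  else if r =? 5 then isubb n R S && negb (eqrb n R S)
  else if r =? 6 then subb n S R && negb (isubb n S R) && negb (eqrb n S R)
  else isubb n S R && negb (eqrb n S R).

(* Labels are read off truth vectors indexed by formula codes; a code [j] has tag [cfst j]
   and payload [csnd j] (see [code]). *)
Definition lbl (H : list bool) j := nth j H false.
Definition is_box j := (cfst j =? 3) && (cfst (csnd j) <? 8).
Definition box_rel j := cfst (csnd j).
Definition box_arg j := csnd (csnd j).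

Definition bool_ok k (H : list bool) :=
  forallb (fun j =>
    implb (cfst j =? 1) (Bool.eqb (lbl H j) (negb (lbl H (csnd j)))) &&
    implb (cfst j =? 2) (Bool.eqb (lbl H j) (lbl H (cfst (csnd j)) && lbl H (csnd (csnd j)))))
  (seq 0 (S k)).

Definition pair_ok n k (p q : node) :=
  implb (eqrb n (fst p) (fst q))
    (forallb (fun j => Bool.eqb (lbl (snd p) j) (lbl (snd q) j)) (seq 0 (S k))) &&
  forallb (fun j => implb (is_box j && relb n (box_rel j) (fst p) (fst q) && lbl (snd p) j)
                          (lbl (snd q) (box_arg j))) (seq 0 (S k)).

Definition coherent n k (c : config) :=
  forallb (fun p => bool_ok k (snd p)) c && forallb (fun p => forallb (pair_ok n k p) c) c.

Definition witnessed n (c : config) (p : node) j :=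
  existsb (fun q => relb n (box_rel j) (fst p) (fst q) && negb (lbl (snd q) (box_arg j))) c.

Definition pending n (c : config) i j :=
  is_box j && negb (lbl (snd (nth i c dnode)) j) && negb (witnessed n c (nth i c dnode) j).

Definition obligations n k (c : config) :=
  flat_map (fun i => map (fun j => (i, j)) (filter (pending n c i) (seq 0 (S k)))) (seq 0 (length c)).

Definition scale_node (p : node) : node := (map (fun ab => (3 * fst ab, 3 * snd ab)) (fst p), snd p).
Definition scale (c : config) : config := map scale_node c.

Definition max_coord (c : config) :=
  list_max (flat_map (fun p => flat_map (fun ab => [fst ab; snd ab]) (fst p)) c).

Definition intervals B := flat_map (fun a => map (fun b => (a, b)) (seq (S a) (B - a))) (seq 1 B).

Definition tuples {A} m (L : list A) :=
  Nat.iter m (fun acc => flat_map (fun l => map (fun x => x :: l) L) acc) [[]].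

Definition candidates n k (c : config) : list node :=
  flat_map (fun R => map (fun H => (R, H)) (tuples (S k) [false; true]))
    (tuples n (intervals (max_coord c + 2))).

Definition successors n k (c : config) (o : nat * nat) : list config :=
  map (fun p => c ++ [p])
    (filter (fun p => relb n (box_rel (snd o)) (fst (nth (fst o) c dnode)) (fst p)
                      && negb (lbl (snd p) (box_arg (snd o))) && coherent n k (c ++ [p]))
       (candidates n k c)).

Definition expand n k (c : config) : list config :=
  let c' := scale c in
  if length (obligations n k c') =? 0 then filter (coherent n k) [c']
  else successors n k c' (nth 0 (obligations n k c') (0, 0)).

Definition initial n k : list config :=
  filter (coherent n k)
    (map (fun H => [(repeat (1, 2) n, H)]) (filter (fun H => negb (lbl H k)) (tuples (S k) [false; true]))).

Definition search n k d := Nat.iter d (flat_map (expand n k)) (initial n k).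

Definition code_step (l : list bool) j :=
  (cfst j =? 0) || (cfst j =? 1) && lbl l (csnd j) ||
  (cfst j =? 2) && lbl l (cfst (csnd j)) && lbl l (csnd (csnd j)) ||
  is_box j && lbl l (box_arg j).

Definition code_prefix m := Nat.iter m (fun l => l ++ [code_step l (length l)]) [].
Definition is_code k := lbl (code_prefix (S k)) k.

Definition refuted n k d := is_code k && (length (search n k d) =? 0).

Section SearchComputable.
Variable n : nat.

Lemma computable_ilo : computable (fun p : irect * nat => ilo (fst p) (snd p)).
Proof. unfold ilo; computable_auto. Qed.
Lemma computable_ihi : computable (fun p : irect * nat => ihi (fst p) (snd p)).
Proof. unfold ihi; computable_auto. Qed.
#[local] Hint Resolve computable_ilo computable_ihi : computable.

Lemma computable_meetsb : computable (fun p : irect * irect => meetsb n (fst p) (snd p)).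
Proof. unfold meetsb; computable_auto. Qed.
Lemma computable_imeetsb : computable (fun p : irect * irect => imeetsb n (fst p) (snd p)).
Proof. unfold imeetsb; computable_auto. Qed.
Lemma computable_subb : computable (fun p : irect * irect => subb n (fst p) (snd p)).
Proof. unfold subb; computable_auto. Qed.
Lemma computable_isubb : computable (fun p : irect * irect => isubb n (fst p) (snd p)).
Proof. unfold isubb; computable_auto. Qed.
Lemma computable_eqrb : computable (fun p : irect * irect => eqrb n (fst p) (snd p)).
Proof. unfold eqrb; computable_auto. Qed.
#[local] Hint Resolve computable_meetsb computable_imeetsb computable_subb computable_isubb
  computable_eqrb : computable.

Lemma computable_relb :
  computable (fun p : nat * (irect * irect) => relb n (fst p) (fst (snd p)) (snd (snd p))).
Proof. unfold relb; computable_auto. Qed.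
#[local] Hint Resolve computable_relb : computable.

Lemma computable_lbl : computable (fun p : list bool * nat => lbl (fst p) (snd p)).
Proof. unfold lbl; computable_auto. Qed.
Lemma computable_is_box : computable is_box.
Proof. unfold is_box; computable_auto. Qed.
Lemma computable_box_rel : computable box_rel.
Proof. unfold box_rel; computable_auto. Qed.
Lemma computable_box_arg : computable box_arg.
Proof. unfold box_arg; computable_auto. Qed.
#[local] Hint Resolve computable_lbl computable_is_box computable_box_rel computable_box_arg
  : computable.

Lemma computable_bool_ok : computable (fun p : nat * list bool => bool_ok (fst p) (snd p)).
Proof. unfold bool_ok; computable_auto. Qed.
Lemma computable_pair_ok :
  computable (fun p : nat * (node * node) => pair_ok n (fst p) (fst (snd p)) (snd (snd p))).
Proof. unfold pair_ok; computable_auto. Qed.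
#[local] Hint Resolve computable_bool_ok computable_pair_ok : computable.

Lemma computable_coherent : computable (fun p : nat * config => coherent n (fst p) (snd p)).
Proof. unfold coherent; computable_auto. Qed.
Lemma computable_witnessed :
  computable (fun p : config * (node * nat) => witnessed n (fst p) (fst (snd p)) (snd (snd p))).
Proof. unfold witnessed; computable_auto. Qed.
#[local] Hint Resolve computable_coherent computable_witnessed : computable.

Lemma computable_pending :
  computable (fun p : config * (nat * nat) => pending n (fst p) (fst (snd p)) (snd (snd p))).
Proof. unfold pending; computable_auto. Qed.
#[local] Hint Resolve computable_pending : computable.

Lemma computable_obligations : computable (fun p : nat * config => obligations n (fst p) (snd p)).
Proof. unfold obligations; computable_auto. Qed.
Lemma computable_scale : computable scale.
Proof. unfold scale, scale_node; computable_auto. Qed.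
#[local] Hint Resolve computable_obligations computable_scale : computable.

Lemma computable_max_coord : computable max_coord.
Proof.
  apply (computable_ext (fun c => fold_left Nat.max (flat_map (fun p => flat_map (fun ab => [fst ab; snd ab]) (fst p)) c) 0)).
  - intros c; unfold max_coord; generalize (flat_map (fun p => flat_map (fun ab => [fst ab; snd ab]) (fst p)) c).
    intros l; change (list_max l) with (Nat.max 0 (list_max l)); generalize 0.
    induction l as [|x l IH]; intros a; simpl; [lia | rewrite IH; lia].
  - computable_auto.
Qed.
Lemma computable_intervals : computable intervals.
Proof. unfold intervals; computable_auto. Qed.
Lemma computable_tuples {A} `{Enc A} : computable (fun p : nat * list A => tuples (fst p) (snd p)).
Proof. unfold tuples; computable_auto. Qed.
#[local] Hint Resolve computable_max_coord computable_intervals computable_tuples : computable.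

Lemma computable_candidates : computable (fun p : nat * config => candidates n (fst p) (snd p)).
Proof. unfold candidates; computable_auto. Qed.
#[local] Hint Resolve computable_candidates : computable.

Lemma computable_successors :
  computable (fun p : nat * (config * (nat * nat)) => successors n (fst p) (fst (snd p)) (snd (snd p))).
Proof. unfold successors; computable_auto. Qed.
#[local] Hint Resolve computable_successors : computable.

Lemma computable_expand : computable (fun p : nat * config => expand n (fst p) (snd p)).
Proof. unfold expand; computable_auto. Qed.
Lemma computable_initial : computable (initial n).
Proof. unfold initial; computable_auto. Qed.
Lemma computable_is_code : computable is_code.
Proof. unfold is_code, code_prefix, code_step; computable_auto. Qed.
#[local] Hint Resolve computable_expand computable_initial computable_is_code : computable.

Lemma computable_refuted : computable (fun p : nat * nat => refuted n (snd p) (fst p)).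
Proof. unfold refuted, search; computable_auto. Qed.

End SearchComputable.

Lemma csnd_lt j : 1 <= cfst j -> csnd j < j.
Proof. intros H; rewrite <- (cpair_cfst_csnd j) at 2; apply cpair_gt_r, H. Qed.

Lemma cfst_le j : cfst j <= j.
Proof. rewrite <- (cpair_cfst_csnd j) at 2; apply cpair_ge_l. Qed.

Lemma csnd_le j : csnd j <= j.
Proof. rewrite <- (cpair_cfst_csnd j) at 2; apply cpair_ge_r. Qed.

Lemma is_box_spec j : is_box j = true <-> cfst j = 3 /\ box_rel j < 8.
Proof. unfold is_box, box_rel; rewrite andb_true_iff, Nat.eqb_eq, Nat.ltb_lt; reflexivity. Qed.

Lemma box_arg_lt j : is_box j = true -> box_arg j < j.
Proof.
  intros [H _]%is_box_spec; pose proof (csnd_le (csnd j)); pose proof (csnd_lt j); unfold box_arg; lia.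
Qed.

Definition rcc8_of (c : nat) : rcc8 :=
  match c with 0 => DC | 1 => EC | 2 => PO | 3 => EQ | 4 => TPP | 5 => NTPP | 6 => TPPI | _ => NTPPI end.

Lemma rcc8_of_code r : rcc8_of (rcc8_code r) = r.
Proof. destruct r; reflexivity. Qed.

Lemma code_rcc8_of c : c < 8 -> rcc8_code (rcc8_of c) = c.
Proof. intros; do 8 (destruct c as [|c]; [reflexivity|]); lia. Qed.

Lemma rcc8_code_lt r : rcc8_code r < 8.
Proof. destruct r; simpl; lia. Qed.

Lemma code_Box_is_box r a : is_box (code (Box r a)) = true.
Proof.
  apply is_box_spec; unfold box_rel; simpl code; rewrite cfst_cpair, csnd_cpair, cfst_cpair.
  split; [reflexivity | apply rcc8_code_lt].
Qed.

Lemma box_rel_code r a : box_rel (code (Box r a)) = rcc8_code r.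
Proof. unfold box_rel; simpl code; rewrite csnd_cpair, cfst_cpair; reflexivity. Qed.

Lemma box_arg_code r a : box_arg (code (Box r a)) = code a.
Proof. unfold box_arg; simpl code; rewrite !csnd_cpair; reflexivity. Qed.

Lemma length_code_prefix m : length (code_prefix m) = m.
Proof. induction m; simpl; [|rewrite length_app, IHm; simpl]; lia. Qed.

Lemma code_prefix_S m : code_prefix (S m) = code_prefix m ++ [code_step (code_prefix m) m].
Proof. unfold code_prefix at 1; simpl; fold (code_prefix m); rewrite length_code_prefix; reflexivity. Qed.

Lemma lbl_code_prefix y m : y < m -> lbl (code_prefix m) y = is_code y.
Proof.
  induction 1 as [|m Hm IH]; [reflexivity|].
  rewrite code_prefix_S; unfold lbl in *; rewrite app_nth1; [exact IH | rewrite length_code_prefix; lia].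
Qed.

Lemma is_code_step j : is_code j = code_step (code_prefix j) j.
Proof.
  unfold is_code; rewrite code_prefix_S; unfold lbl.
  rewrite app_nth2 by (rewrite length_code_prefix; lia).
  rewrite length_code_prefix, Nat.sub_diag; reflexivity.
Qed.

Lemma payload_lt j : 1 <= cfst j -> csnd j < j /\ cfst (csnd j) < j /\ csnd (csnd j) < j.
Proof. intros H; pose proof (csnd_lt j H); pose proof (cfst_le (csnd j)); pose proof (csnd_le (csnd j)); lia. Qed.

Lemma is_code_code phi : is_code (code phi) = true.
Proof.
  induction phi as [k | a IH | a IHa b IHb | r a IH]; rewrite is_code_step; unfold code_step.
  - simpl code; rewrite cfst_cpair; reflexivity.
  - assert (Ha : code a < code (Neg a)) by (apply cpair_gt_r; lia).
    simpl code in *; rewrite cfst_cpair, csnd_cpair, lbl_code_prefix, IH by exact Ha.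
    reflexivity.
  - destruct (payload_lt (code (And a b))) as [_ [Ha Hb]]; [simpl; rewrite cfst_cpair; lia|].
    simpl code in *; rewrite cfst_cpair, !csnd_cpair, cfst_cpair in *.
    rewrite (lbl_code_prefix (code a)), (lbl_code_prefix (code b)), IHa, IHb by assumption.
    reflexivity.
  - rewrite code_Box_is_box, (lbl_code_prefix (box_arg _)), box_arg_code, IH
      by (apply box_arg_lt, code_Box_is_box).
    apply orb_true_iff; right; reflexivity.
Qed.

Lemma is_code_decode j : is_code j = true -> exists phi, code phi = j.
Proof.
  induction j as [j IH] using (well_founded_induction lt_wf).
  rewrite is_code_step; unfold code_step.
  assert (Hsub : forall y, y < j -> lbl (code_prefix j) y = true -> exists phi, code phi = y)
    by (intros y Hy; rewrite lbl_code_prefix by exact Hy; apply IH, Hy).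
  rewrite !orb_true_iff, !andb_true_iff, !Nat.eqb_eq.
  intros [[[Hv | [Hn Ha]] | [[Ha Hb] Hc]] | [Hbox Ha]].
  - exists (Var (csnd j)); simpl; rewrite <- Hv; apply cpair_cfst_csnd.
  - destruct (Hsub _ (proj1 (payload_lt j ltac:(lia))) Ha) as [a Ea].
    exists (Neg a); simpl; rewrite Ea, <- Hn; apply cpair_cfst_csnd.
  - destruct (payload_lt j ltac:(lia)) as [_ [H1 H2]].
    destruct (Hsub _ H1 Hb) as [a Ea], (Hsub _ H2 Hc) as [b Eb].
    exists (And a b); simpl; rewrite Ea, Eb, cpair_cfst_csnd, <- Ha; apply cpair_cfst_csnd.
  - pose proof Hbox as [Htag Hr]%is_box_spec.
    destruct (Hsub _ (box_arg_lt j Hbox) Ha) as [a Ea].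
    exists (Box (rcc8_of (box_rel j)) a); simpl.
    rewrite code_rcc8_of, Ea by exact Hr; unfold box_rel, box_arg; rewrite cpair_cfst_csnd, <- Htag.
    apply cpair_cfst_csnd.
Qed.

Lemma is_code_spec j : is_code j = true <-> exists phi, code phi = j.
Proof. split; [apply is_code_decode | intros [phi <-]; apply is_code_code]. Qed.

Section CodeTruth.
Context {n : nat} (W : rect n -> Prop) (V : nat -> rect n -> Prop).

(* Truth of an arbitrary number read as a formula code; numbers that are not codes are read
   as trees whose malformed leaves are false. *)
Fixpoint holds_fuel (f j : nat) (w : rect n) : Prop :=
  match f with
  | 0 => False
  | S f =>
    if cfst j =? 0 then V (csnd j) w
    else if cfst j =? 1 then ~ holds_fuel f (csnd j) w
    else if cfst j =? 2 then holds_fuel f (cfst (csnd j)) w /\ holds_fuel f (csnd (csnd j)) w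
    else if is_box j then
      forall t, W t -> rcc8_rel (rcc8_of (box_rel j)) w t -> holds_fuel f (box_arg j) t
    else False
  end.

Lemma holds_fuel_stable j : forall f1 f2 w, j < f1 -> j < f2 ->
  (holds_fuel f1 j w <-> holds_fuel f2 j w).
Proof.
  induction j as [j IH] using (well_founded_induction lt_wf).
  intros [|f1] [|f2] w H1 H2; try lia; simpl.
  destruct (Nat.eqb_spec (cfst j) 0); [reflexivity|].
  destruct (payload_lt j ltac:(lia)) as [Hp [Hl Hr]].
  destruct (Nat.eqb_spec (cfst j) 1); [rewrite (IH _ Hp f1 f2) by lia; reflexivity|].
  destruct (Nat.eqb_spec (cfst j) 2); [rewrite (IH _ Hl f1 f2), (IH _ Hr f1 f2) by lia; reflexivity|].
  destruct (is_box j) eqn:B; [|reflexivity].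
  pose proof (box_arg_lt j B).
  split; intros Hb t Ht Hrel; specialize (Hb t Ht Hrel); revert Hb; apply IH; lia.
Qed.

Definition holds j w := holds_fuel (S j) j w.

Lemma holds_var j w : cfst j = 0 -> holds j w <-> V (csnd j) w.
Proof. intros H; unfold holds at 1; simpl holds_fuel at 1; rewrite H; reflexivity. Qed.

Lemma holds_neg j w : cfst j = 1 -> holds j w <-> ~ holds (csnd j) w.
Proof.
  intros H; unfold holds at 1; simpl holds_fuel at 1; rewrite H; simpl.
  rewrite (holds_fuel_stable (csnd j) j (S (csnd j))); [reflexivity | apply csnd_lt | ..]; lia.
Qed.

Lemma holds_and j w : cfst j = 2 ->
  holds j w <-> holds (cfst (csnd j)) w /\ holds (csnd (csnd j)) w.
Proof.
  intros H; unfold holds at 1; simpl holds_fuel at 1; rewrite H; simpl.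
  destruct (payload_lt j ltac:(lia)) as [_ [Hl Hr]].
  rewrite (holds_fuel_stable (cfst (csnd j)) j (S (cfst (csnd j)))),
    (holds_fuel_stable (csnd (csnd j)) j (S (csnd (csnd j)))) by lia.
  reflexivity.
Qed.

Lemma holds_box j w : is_box j = true ->
  holds j w <-> forall t, W t -> rcc8_rel (rcc8_of (box_rel j)) w t -> holds (box_arg j) t.
Proof.
  intros B; pose proof B as [H _]%is_box_spec; pose proof (box_arg_lt j B).
  unfold holds at 1; simpl holds_fuel at 1; rewrite H, B; simpl.
  split; intros Hb t Ht Hrel; specialize (Hb t Ht Hrel); revert Hb; apply holds_fuel_stable; lia.
Qed.

Lemma holds_code phi w : holds (code phi) w <-> sat W V w phi.
Proof.
  revert w; induction phi as [k | a IH | a IHa b IHb | r a IH]; intros w; simpl sat.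
  - rewrite holds_var by apply cfst_cpair; simpl code; rewrite csnd_cpair; reflexivity.
  - rewrite holds_neg by apply cfst_cpair; simpl code; rewrite csnd_cpair, IH; reflexivity.
  - rewrite holds_and by apply cfst_cpair; simpl code.
    rewrite !csnd_cpair, cfst_cpair, IHa, IHb; reflexivity.
  - rewrite holds_box, box_rel_code, box_arg_code, rcc8_of_code by apply code_Box_is_box.
    split; intros Hb t Ht Hrel; apply IH; auto.
Qed.

End CodeTruth.

(** * Integer rectangles realising real ones *)

Definition iend (R : irect) i (e : bool) := if e then ihi R i else ilo R i.
Definition rend {n} (s : rect n) i (e : bool) := if e then hi s i else lo s i.

Definition agree {n} (R S : irect) (s t : rect n) := forall (i : coord n) e e',
  Nat.compare (iend R (proj1_sig i) e) (iend S (proj1_sig i) e') = Rcompare (rend s i e) (rend t i e').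

Lemma compare_ltb a b x y : Nat.compare a b = Rcompare x y -> (a <? b) = true <-> (x < y)%R.
Proof.
  rewrite Nat.ltb_lt; destruct (Nat.compare_spec a b), (Rcompare_spec x y); intros E;
    try discriminate; split; intros; lia || lra.
Qed.

Lemma compare_leb a b x y : Nat.compare a b = Rcompare x y -> (a <=? b) = true <-> (x <= y)%R.
Proof.
  rewrite Nat.leb_le; destruct (Nat.compare_spec a b), (Rcompare_spec x y); intros E;
    try discriminate; split; intros; lia || lra.
Qed.

Lemma compare_eqb a b x y : Nat.compare a b = Rcompare x y -> (a =? b) = true <-> x = y.
Proof.
  rewrite Nat.eqb_eq; destruct (Nat.compare_spec a b), (Rcompare_spec x y); intros E;
    try discriminate; split; intros; lia || lra.
Qed.

Lemma Rcompare_antisym x y : Rcompare y x = CompOpp (Rcompare x y).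
Proof. destruct (Rcompare_spec x y), (Rcompare_spec y x); try reflexivity; lra. Qed.

Lemma agree_sym {n} R S (s t : rect n) : agree R S s t -> agree S R t s.
Proof.
  intros H i e e'; rewrite Nat.compare_antisym, Rcompare_antisym, H; reflexivity.
Qed.

Lemma forallb_coords n (P : nat -> bool) :
  forallb P (seq 0 n) = true <-> forall i : coord n, P (proj1_sig i) = true.
Proof.
  rewrite forallb_forall; split.
  - intros H [i Hi]; apply H, in_seq; simpl; lia.
  - intros H i Hi; apply in_seq in Hi; exact (H (exist _ i (proj2 Hi))).
Qed.

Lemma forallb_coords_iff n (P : nat -> bool) (Q : coord n -> Prop) :
  (forall i, P (proj1_sig i) = true <-> Q i) -> forallb P (seq 0 n) = true <-> forall i, Q i.
Proof. intros E; rewrite forallb_coords; split; intros H i; apply E, H. Qed.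

Section Transfer.
Context {n : nat} (R S : irect) (s t : rect n) (HRS : agree R S s t).

Let HSR := agree_sym R S s t HRS.

Lemma meetsb_iff : meetsb n R S = true <-> meets (region s) (region t).
Proof.
  rewrite meets_region_iff; apply forallb_coords_iff; intros i.
  pose proof (compare_leb _ _ _ _ (HRS i false true)); pose proof (compare_leb _ _ _ _ (HSR i false true)).
  cbn [iend rend] in *; rewrite andb_true_iff; tauto.
Qed.

Lemma imeetsb_iff : imeetsb n R S = true <-> meets (interior (region s)) (interior (region t)).
Proof.
  rewrite meets_interior_iff; apply forallb_coords_iff; intros i.
  pose proof (compare_ltb _ _ _ _ (HRS i false true)); pose proof (compare_ltb _ _ _ _ (HSR i false true)).
  cbn [iend rend] in *; rewrite andb_true_iff; tauto.
Qed.

Lemma subb_iff : subb n R S = true <-> subset (region s) (region t).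
Proof.
  rewrite subset_region_iff; apply forallb_coords_iff; intros i.
  pose proof (compare_leb _ _ _ _ (HSR i false false)); pose proof (compare_leb _ _ _ _ (HRS i true true)).
  cbn [iend rend] in *; rewrite andb_true_iff; tauto.
Qed.

Lemma isubb_iff : isubb n R S = true <-> subset (region s) (interior (region t)).
Proof.
  rewrite subset_interior_iff; apply forallb_coords_iff; intros i.
  pose proof (compare_ltb _ _ _ _ (HSR i false false)); pose proof (compare_ltb _ _ _ _ (HRS i true true)).
  cbn [iend rend] in *; rewrite andb_true_iff; tauto.
Qed.

Lemma eqrb_iff : eqrb n R S = true <-> seteq (region s) (region t).
Proof.
  rewrite seteq_region_iff; apply forallb_coords_iff; intros i.
  pose proof (compare_eqb _ _ _ _ (HRS i false false)); pose proof (compare_eqb _ _ _ _ (HRS i true true)).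
  cbn [iend rend] in *; rewrite andb_true_iff; tauto.
Qed.
End Transfer.

Lemma relb_iff {n} c R S (s t : rect n) : c < 8 -> agree R S s t ->
  relb n c R S = true <-> rcc8_rel (rcc8_of c) s t.
Proof.
  intros Hc HRS; pose proof (agree_sym _ _ _ _ HRS) as HSR.
  rewrite <- (code_rcc8_of c Hc) at 1; generalize (rcc8_of c) as r; intros r.
  unfold relb, rcc8_rel, rcc8_sets; destruct r; simpl;
    rewrite ?andb_true_iff, ?negb_true_iff, <- ?not_true_iff_false,
      ?(meetsb_iff _ _ _ _ HRS), ?(imeetsb_iff _ _ _ _ HRS), ?(subb_iff _ _ _ _ HRS),
      ?(subb_iff _ _ _ _ HSR), ?(isubb_iff _ _ _ _ HRS), ?(isubb_iff _ _ _ _ HSR),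
      ?(eqrb_iff _ _ _ _ HRS), ?(eqrb_iff _ _ _ _ HSR); tauto.
Qed.

Lemma eqrb_eq_iff {n} R S (s t : rect n) : agree R S s t -> eqrb n R S = true <-> s = t.
Proof.
  intros HRS; rewrite (eqrb_iff _ _ _ _ HRS), seteq_region_iff.
  split; [apply rect_ext | intros <- i; split; reflexivity].
Qed.

(** * Soundness of the search *)

Lemma list_max_in_or_0 l : list_max l = 0 \/ In (list_max l) l.
Proof.
  induction l as [|a l IH]; simpl; auto.
  destruct (Nat.max_spec a (list_max l)) as [[_ ->] | [_ ->]]; [destruct IH|]; auto.
Qed.

Lemma le_list_max x l : In x l -> x <= list_max l.
Proof. intros H; exact (proj1 (Forall_forall _ l) (proj1 (list_max_le l _) (le_n _)) x H). Qed.

Section Slots.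
Variables (I : list (nat * R)) (M : nat).
Hypothesis Hiso : forall p q, In p I -> In q I ->
  Nat.compare (fst p) (fst q) = Rcompare (snd p) (snd q).
Hypothesis Hgrid : forall p, In p I -> exists z, fst p = 3 * z /\ 1 <= z /\ 3 * z <= M.

Definition below (c : R) :=
  list_max (map fst (filter (fun p => if Rlt_dec (snd p) c then true else false) I)).

Lemma below_ge p c : In p I -> (snd p < c)%R -> fst p <= below c.
Proof.
  intros Hp Hc; apply le_list_max, in_map, filter_In; split; auto.
  destruct (Rlt_dec _ _); [reflexivity | contradiction].
Qed.

Lemma below_cases c : below c = 0 \/ exists q, In q I /\ (snd q < c)%R /\ fst q = below c.
Proof.
  unfold below; destruct (list_max_in_or_0 (map fst (filter (fun p => if Rlt_dec (snd p) c then true else false) I)))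
    as [E | [q [E [Hq Hc]%filter_In]]%in_map_iff]; [left; exact E | right].
  exists q; destruct (Rlt_dec _ _); [auto | discriminate].
Qed.

Lemma below_grid c : exists z, below c = 3 * z /\ 3 * z <= M.
Proof.
  destruct (below_cases c) as [-> | [q [Hq [_ <-]]]]; [exists 0; lia|].
  destruct (Hgrid q Hq) as [z Hz]; exists z; lia.
Qed.

Lemma below_lt p c : In p I -> (c < snd p)%R -> below c + 3 <= fst p.
Proof.
  intros Hp Hc; destruct (Hgrid p Hp) as [zp Hzp].
  destruct (below_cases c) as [-> | [q [Hq [Hqc <-]]]]; [lia|].
  destruct (Hgrid q Hq) as [zq Hzq]; pose proof (Hiso q p Hq Hp) as E.
  destruct (Rcompare_spec (snd q) (snd p)); [lra | | lra].
  apply Nat.compare_lt_iff in E; lia.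
Qed.

Definition slot (c : R) (off : nat) : nat :=
  match find (fun p => if Req_EM_T (snd p) c then true else false) I with
  | Some p => fst p
  | None => below c + off
  end.

Lemma slot_cases c off :
  (exists p, In p I /\ snd p = c /\ slot c off = fst p) \/
  ((forall p, In p I -> snd p <> c) /\ slot c off = below c + off).
Proof.
  unfold slot; destruct (find _ I) as [p|] eqn:E.
  - apply find_some in E as [Hp Hc]; left; exists p; destruct (Req_EM_T _ _); [auto | discriminate].
  - right; split; [|reflexivity]; intros p Hp Hc.
    pose proof (find_none _ _ E p Hp) as Hf; simpl in Hf.
    destruct (Req_EM_T (snd p) c); [discriminate | contradiction].
Qed.

Lemma slot_compare c off : 1 <= off <= 2 -> forall p, In p I ->
  Nat.compare (slot c off) (fst p) = Rcompare c (snd p).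
Proof.
  intros Hoff p Hp; destruct (slot_cases c off) as [[p0 [Hp0 [<- ->]]] | [Hnew ->]]; [apply Hiso; auto|].
  destruct (Rcompare_spec c (snd p)) as [E | Hlt | Hgt]; [destruct (Hnew p Hp); auto | ..].
  - apply Nat.compare_lt_iff; pose proof (below_lt p c Hp Hlt); lia.
  - apply Nat.compare_gt_iff; pose proof (below_ge p c Hp Hgt); lia.
Qed.

Lemma slot_bounds c off : 1 <= off <= 2 -> 1 <= slot c off <= M + 2.
Proof.
  intros Hoff; destruct (slot_cases c off) as [[p0 [Hp0 [_ ->]]] | [_ ->]].
  - destruct (Hgrid p0 Hp0); lia.
  - destruct (below_grid c); lia.
Qed.

Lemma slot_lt a b : (a < b)%R -> slot a 1 < slot b 2.
Proof.
  intros Hab.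
  destruct (slot_cases a 1) as [[pa [Hpa [Ea ->]]] | [_ ->]],
    (slot_cases b 2) as [[pb [Hpb [Eb ->]]] | [_ ->]].
  - apply Nat.compare_lt_iff; rewrite Hiso, Ea, Eb by assumption.
    destruct (Rcompare_spec a b); [lra | reflexivity | lra].
  - pose proof (below_ge pa b Hpa ltac:(lra)); lia.
  - pose proof (below_lt pb a Hpb ltac:(lra)); lia.
  - destruct (below_cases a) as [-> | [q [Hq [Hqa <-]]]]; [lia|].
    pose proof (below_ge q b Hq ltac:(lra)); lia.
Qed.
End Slots.

Lemma forallb_nth {A} (f : A -> bool) l d :
  (forall i, i < length l -> f (nth i l d) = true) -> forallb f l = true.
Proof. intros H; apply forallb_forall; intros x Hx; destruct (In_nth l x d Hx) as [i [Hi <-]]; auto. Qed.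

Lemma forallb_seq_le k (f : nat -> bool) :
  (forall j, j <= k -> f j = true) -> forallb f (seq 0 (S k)) = true.
Proof. intros H; apply forallb_forall; intros j Hj%in_seq; apply H; lia. Qed.

Lemma tuples_in {A} m (L : list A) l :
  In l (tuples m L) <-> length l = m /\ forall x, In x l -> In x L.
Proof.
  revert l; induction m as [|m IH]; intros l; simpl.
  - split; [intros [<- | []]; split; [reflexivity | intros _ []]|].
    intros [Hl _]; destruct l; [left; reflexivity | discriminate].
  - fold (tuples m L); rewrite in_flat_map; split.
    + intros [l' [Hl' [x [<- Hx]]%in_map_iff]]; apply IH in Hl' as [Hlen Hin].
      split; [simpl; lia | intros y [<- | Hy]; auto].
    + intros [Hlen Hin]; destruct l as [|x l']; [discriminate|].
      exists l'; split; [apply IH; split; [simpl in Hlen; lia | intros; apply Hin; right; auto]|].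
      apply in_map_iff; exists x; split; [reflexivity | apply Hin; left; reflexivity].
Qed.

Lemma intervals_in B a b : In (a, b) (intervals B) <-> 1 <= a < b /\ b <= B.
Proof.
  unfold intervals; rewrite in_flat_map; split.
  - intros [a' [Ha' [b' [[= <- <-] Hb']]%in_map_iff]]; apply in_seq in Ha', Hb'; lia.
  - intros H; exists a; split; [apply in_seq; lia | apply in_map, in_seq; lia].
Qed.

Lemma obligations_in n k c i j :
  In (i, j) (obligations n k c) <-> i < length c /\ j <= k /\ pending n c i j = true.
Proof.
  unfold obligations; rewrite in_flat_map; split.
  - intros [i' [Hi' [j' [[= <- <-] [Hj' Hp]%filter_In]]%in_map_iff]]; apply in_seq in Hi', Hj'.
    repeat split; auto; lia.
  - intros [Hi [Hj Hp]]; exists i; split; [apply in_seq; lia|].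
    apply in_map, filter_In; split; [apply in_seq; lia | exact Hp].
Qed.

Lemma nth_scale c i : nth i (scale c) dnode = scale_node (nth i c dnode).
Proof. unfold scale; change dnode with (scale_node dnode) at 1; apply map_nth. Qed.

Lemma iend_scale_node p m e : iend (fst (scale_node p)) m e = 3 * iend (fst p) m e.
Proof.
  set (f := fun ab : nat * nat => (3 * fst ab, 3 * snd ab)).
  assert (E : nth m (map f (fst p)) (0, 0) = f (nth m (fst p) (0, 0))) by exact (map_nth f (fst p) (0, 0) m).
  unfold iend, ilo, ihi, scale_node; cbn [fst]; fold f; rewrite E; destruct e; reflexivity.
Qed.

Lemma iend_le_max_coord c p m e : In p c -> iend (fst p) m e <= max_coord c.
Proof.
  intros Hp; unfold iend, ilo, ihi.
  destruct (Nat.lt_ge_cases m (length (fst p))) as [Hm | Hm]; [|rewrite nth_overflow by exact Hm; destruct e; simpl; lia].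
  apply le_list_max, in_flat_map; exists p; split; [exact Hp|].
  apply in_flat_map; exists (nth m (fst p) (0, 0)); split; [apply nth_In, Hm | destruct e; simpl; auto].
Qed.

Definition irect_of {n} (g : coord n -> nat * nat) : irect :=
  map (fun m => match lt_dec m n with left Hm => g (exist _ m Hm) | right _ => (0, 0) end) (seq 0 n).

Lemma nth_irect_of {n} (g : coord n -> nat * nat) (i : coord n) :
  nth (proj1_sig i) (irect_of g) (0, 0) = g i.
Proof.
  destruct i as [m Hm]; unfold irect_of; simpl.
  set (F := fun m => match lt_dec m n with left Hm => g (exist _ m Hm) | right _ => (0, 0) end).
  rewrite (nth_indep _ (0, 0) (F 0)) by (rewrite length_map, length_seq; exact Hm).
  rewrite map_nth, seq_nth by exact Hm; unfold F; simpl.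
  destruct (lt_dec m n) as [Hm'|]; [|lia]; rewrite (proof_irrelevance _ Hm' Hm); reflexivity.
Qed.

Lemma irect_of_in_tuples {n} (g : coord n -> nat * nat) L :
  (forall i, In (g i) L) -> In (irect_of g) (tuples n L).
Proof.
  intros H; apply tuples_in; unfold irect_of; rewrite length_map, length_seq; split; [reflexivity|].
  intros x [m [<- Hm%in_seq]]%in_map_iff; destruct (lt_dec m n); [apply H | lia].
Qed.

Lemma iend_irect_of {n} (g : coord n -> nat * nat) (i : coord n) e :
  iend (irect_of g) (proj1_sig i) e = if e then snd (g i) else fst (g i).
Proof. unfold iend, ilo, ihi; rewrite nth_irect_of; reflexivity. Qed.

Lemma succ_b2n_range e : 1 <= S (Nat.b2n e) <= 2.
Proof. destruct e; simpl; lia. Qed.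

Lemma Rcompare_rend_self {n} (t : rect n) i e e' :
  Rcompare (rend t i e) (rend t i e') = Nat.compare (Nat.b2n e) (Nat.b2n e').
Proof.
  pose proof (lo_lt_hi _ t i); destruct e, e'; simpl;
    match goal with |- Rcompare ?x ?y = _ => destruct (Rcompare_spec x y) end; reflexivity || lra.
Qed.

(* The new rectangle [t] gets, in each coordinate, the slots of its endpoints among the
   endpoints already placed; the spacing by multiples of 3 leaves room for both. *)
Lemma extension_irect {n} (c : config) (ws : nat -> rect n) (t : rect n) :
  (forall a a', a < length c -> a' < length c ->
     agree (fst (nth a c dnode)) (fst (nth a' c dnode)) (ws a) (ws a')) ->
  (forall a m e, a < length c -> m < n -> exists z, iend (fst (nth a c dnode)) m e = 3 * z /\ 1 <= z) ->
  exists R, In R (tuples n (intervals (max_coord c + 2))) /\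
    (forall a, a < length c -> agree (fst (nth a c dnode)) R (ws a) t) /\
    agree R R t t /\ (forall m e, m < n -> 1 <= iend R m e).
Proof.
  intros Hagree Hgrid3.
  set (I := fun i : coord n => flat_map (fun a => map (fun e =>
    (iend (fst (nth a c dnode)) (proj1_sig i) e, rend (ws a) i e)) [false; true]) (seq 0 (length c))).
  assert (HI : forall i p, In p (I i) -> exists a e, a < length c /\
    p = (iend (fst (nth a c dnode)) (proj1_sig i) e, rend (ws a) i e)).
  { intros i p [a [Ha%in_seq [e [<- _]]%in_map_iff]]%in_flat_map; exists a, e; split; [lia | reflexivity]. }
  assert (HI' : forall i a e, a < length c ->
    In (iend (fst (nth a c dnode)) (proj1_sig i) e, rend (ws a) i e) (I i)).
  { intros i a e Ha; apply in_flat_map; exists a; split; [apply in_seq; lia|].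
    apply in_map_iff; exists e; split; [reflexivity | destruct e; simpl; auto]. }
  assert (Hiso : forall i p q, In p (I i) -> In q (I i) -> Nat.compare (fst p) (fst q) = Rcompare (snd p) (snd q)).
  { intros i p q [a [e [Ha ->]]]%HI [a' [e' [Ha' ->]]]%HI; apply Hagree; assumption. }
  assert (Hgrid : forall i p, In p (I i) -> exists z, fst p = 3 * z /\ 1 <= z /\ 3 * z <= max_coord c).
  { intros i p [a [e [Ha ->]]]%HI; destruct (Hgrid3 a (proj1_sig i) e Ha (proj2_sig i)) as [z [Ez Hz]].
    exists z; cbn [fst]; rewrite <- Ez; split; [reflexivity | split; [exact Hz|]].
    apply iend_le_max_coord, nth_In, Ha. }
  set (g := fun i => (slot (I i) (lo t i) 1, slot (I i) (hi t i) 2)).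
  assert (Hslot : forall i e, iend (irect_of g) (proj1_sig i) e = slot (I i) (rend t i e) (S (Nat.b2n e))).
  { intros i e; rewrite iend_irect_of; destruct e; reflexivity. }
  pose proof (fun i => slot_lt (I i) _ (Hiso i) (Hgrid i) _ _ (lo_lt_hi _ t i)) as Hlt.
  exists (irect_of g); split; [|split; [|split]].
  - apply irect_of_in_tuples; intros i; apply intervals_in.
    pose proof (slot_bounds (I i) _ (Hgrid i) (lo t i) 1 ltac:(lia)); pose proof (slot_bounds (I i) _ (Hgrid i) (hi t i) 2 ltac:(lia)).
    specialize (Hlt i); simpl; lia.
  - intros a Ha i e e'; rewrite Hslot, Nat.compare_antisym, Rcompare_antisym.
    f_equal; apply (slot_compare (I i) _ (Hiso i) (Hgrid i) _ _ (succ_b2n_range e')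
      (iend (fst (nth a c dnode)) (proj1_sig i) e, rend (ws a) i e)), HI', Ha.
  - intros i e e'; rewrite !Hslot, Rcompare_rend_self; specialize (Hlt i).
    destruct e, e'; simpl in *; [apply Nat.compare_eq_iff | apply Nat.compare_gt_iff | apply Nat.compare_lt_iff | apply Nat.compare_eq_iff]; lia.
  - intros m e Hm; pose proof (Hslot (exist _ m Hm) e) as E; simpl in E; rewrite E.
    apply (slot_bounds _ _ (Hgrid _)), succ_b2n_range.
Qed.

Lemma compare_mul3 a b : Nat.compare (3 * a) (3 * b) = Nat.compare a b.
Proof.
  destruct (Nat.compare_spec a b);
    [apply Nat.compare_eq_iff | apply Nat.compare_lt_iff | apply Nat.compare_gt_iff]; lia.
Qed.

Lemma agree_scale_node {n} p q (s t : rect n) :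
  agree (fst p) (fst q) s t -> agree (fst (scale_node p)) (fst (scale_node q)) s t.
Proof. intros H i e e'; rewrite !iend_scale_node, compare_mul3; apply H. Qed.

Lemma nth_snoc {A} (l : list A) x d i :
  nth i (l ++ [x]) d = if i =? length l then x else nth i l d.
Proof.
  destruct (Nat.eqb_spec i (length l)) as [->|Hne].
  - rewrite app_nth2, Nat.sub_diag by lia; reflexivity.
  - destruct (Nat.lt_ge_cases i (length l)); [apply app_nth1; assumption|].
    rewrite !nth_overflow; [reflexivity | | ]; rewrite ?length_app; simpl; lia.
Qed.

Section Realization.
Context {n : nat} (W : rect n -> Prop) (V : nat -> rect n -> Prop) (k : nat).

Definition holdsb j w : bool := if excluded_middle_informative (holds W V j w) then true else false.

Lemma holdsb_spec j w : holdsb j w = true <-> holds W V j w.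
Proof. unfold holdsb; destruct (excluded_middle_informative _); split; congruence || tauto. Qed.

Definition truth_vector (w : rect n) : list bool := map (fun j => holdsb j w) (seq 0 (S k)).

Lemma lbl_truth_vector w j : j <= k -> lbl (truth_vector w) j = holdsb j w.
Proof.
  intros Hj; unfold lbl, truth_vector.
  rewrite (nth_indep _ false (holdsb 0 w)) by (rewrite length_map, length_seq; lia).
  change (holdsb 0 w) with ((fun j => holdsb j w) 0).
  rewrite map_nth, seq_nth by lia; reflexivity.
Qed.

Lemma holdsb_neg j w : cfst j = 1 -> holdsb j w = negb (holdsb (csnd j) w).
Proof.
  intros H; apply eq_iff_eq_true; rewrite negb_true_iff, <- not_true_iff_false, !holdsb_spec.
  apply holds_neg, H.
Qed.

Lemma holdsb_and j w : cfst j = 2 -> holdsb j w = holdsb (cfst (csnd j)) w && holdsb (csnd (csnd j)) w.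
Proof. intros H; apply eq_iff_eq_true; rewrite andb_true_iff, !holdsb_spec; apply holds_and, H. Qed.

Lemma bool_ok_truth_vector w : bool_ok k (truth_vector w) = true.
Proof.
  apply forallb_seq_le; intros j Hj; apply andb_true_iff; split; apply implb_true_iff;
    intros Htag%Nat.eqb_eq; apply eqb_true_iff;
    destruct (payload_lt j ltac:(lia)) as [Hp [Hl Hr]]; rewrite !lbl_truth_vector by lia.
  - apply holdsb_neg, Htag.
  - apply holdsb_and, Htag.
Qed.

Definition realizes (c : config) (ws : nat -> rect n) :=
  (forall i, i < length c ->
     W (ws i) /\ snd (nth i c dnode) = truth_vector (ws i) /\
     forall m e, m < n -> 1 <= iend (fst (nth i c dnode)) m e) /\
  (forall i i', i < length c -> i' < length c ->
     agree (fst (nth i c dnode)) (fst (nth i' c dnode)) (ws i) (ws i')).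

Lemma realizes_pair_ok c ws i i' : realizes c ws -> i < length c -> i' < length c ->
  pair_ok n k (nth i c dnode) (nth i' c dnode) = true.
Proof.
  intros [Hnode Hagree] Hi Hi'; specialize (Hagree i i' Hi Hi').
  destruct (Hnode i Hi) as [_ [Hlbl _]], (Hnode i' Hi') as [HW' [Hlbl' _]].
  apply andb_true_iff; split; apply implb_true_iff || apply forallb_seq_le.
  - intros Heq%(eqrb_eq_iff _ _ _ _ Hagree); apply forallb_seq_le; intros j _.
    rewrite Hlbl, Hlbl', Heq; apply eqb_reflx.
  - intros j Hj; apply implb_true_iff; rewrite !andb_true_iff; intros [[Hbox Hrel] Hj_true].
    pose proof Hbox as [_ Hr]%is_box_spec; pose proof (box_arg_lt j Hbox).
    rewrite (relb_iff _ _ _ _ _ Hr Hagree) in Hrel.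
    rewrite Hlbl, lbl_truth_vector, holdsb_spec, holds_box in Hj_true by assumption.
    rewrite Hlbl', lbl_truth_vector, holdsb_spec by lia; auto.
Qed.

Lemma realizes_coherent c ws : realizes c ws -> coherent n k c = true.
Proof.
  intros Hc; apply andb_true_iff; split; apply (forallb_nth _ _ dnode); intros i Hi.
  - destruct (proj1 Hc i Hi) as [_ [-> _]]; apply bool_ok_truth_vector.
  - apply (forallb_nth _ _ dnode); intros i' Hi'; apply (realizes_pair_ok c ws); auto.
Qed.

Lemma realizes_scale c ws : realizes c ws -> realizes (scale c) ws.
Proof.
  intros [Hnode Hagree]; assert (Hlen : length (scale c) = length c) by apply length_map.
  split; rewrite Hlen.
  - intros i Hi; rewrite nth_scale; destruct (Hnode i Hi) as [HW [Hl Hge]].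
    split; [exact HW | split; [exact Hl | intros m e Hm; rewrite iend_scale_node; specialize (Hge m e Hm); lia]].
  - intros i i' Hi Hi'; rewrite !nth_scale; apply agree_scale_node, Hagree; assumption.
Qed.

Lemma realizes_snoc c ws R t : realizes c ws -> W t ->
  (forall a, a < length c -> agree (fst (nth a c dnode)) R (ws a) t) -> agree R R t t ->
  (forall m e, m < n -> 1 <= iend R m e) ->
  realizes (c ++ [(R, truth_vector t)]) (fun m => if m =? length c then t else ws m).
Proof.
  intros [Hnode Hagree] Ht Hold Hnew Hge.
  assert (Hlen : length (c ++ [(R, truth_vector t)]) = S (length c)) by (rewrite length_app; simpl; lia).
  split; rewrite Hlen.
  - intros i Hi; rewrite nth_snoc; destruct (Nat.eqb_spec i (length c)); [auto | apply Hnode; lia].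
  - intros i i' Hi Hi'; rewrite !nth_snoc.
    destruct (Nat.eqb_spec i (length c)), (Nat.eqb_spec i' (length c));
      [exact Hnew | apply agree_sym, Hold | apply Hold | apply Hagree]; lia.
Qed.

Lemma truth_vector_in_tuples w : In (truth_vector w) (tuples (S k) [false; true]).
Proof.
  apply tuples_in; unfold truth_vector; rewrite length_map, length_seq.
  split; [reflexivity | intros [|] _; simpl; auto].
Qed.

Lemma scale_grid c ws : realizes c ws -> forall a m e, a < length (scale c) -> m < n ->
  exists z, iend (fst (nth a (scale c) dnode)) m e = 3 * z /\ 1 <= z.
Proof.
  intros [Hnode _] a m e Ha Hm; unfold scale in Ha; rewrite length_map in Ha.
  rewrite nth_scale, iend_scale_node; destruct (Hnode a Ha) as [_ [_ Hge]].
  exists (iend (fst (nth a c dnode)) m e); split; [reflexivity | apply Hge, Hm].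
Qed.

Lemma pending_witness c ws i j : realizes c ws -> i < length c -> j <= k -> pending n c i j = true ->
  exists t, W t /\ rcc8_rel (rcc8_of (box_rel j)) (ws i) t /\ ~ holds W V (box_arg j) t.
Proof.
  intros [Hnode _] Hi Hj Hp; unfold pending in Hp; rewrite !andb_true_iff, !negb_true_iff in Hp.
  destruct Hp as [[Hbox Hlbl] _]; destruct (Hnode i Hi) as [_ [Hl _]].
  rewrite Hl, lbl_truth_vector, <- not_true_iff_false, holdsb_spec, holds_box in Hlbl by assumption.
  apply NNPP; intros Hno; apply Hlbl; intros t Ht Hr; apply NNPP; intros Hnt; apply Hno; eauto.
Qed.

Lemma realizes_expand c ws : realizes c ws -> exists c' ws', In c' (expand n k c) /\ realizes c' ws'.
Proof.
  intros Hc; pose proof (realizes_scale c ws Hc) as Hs; unfold expand; cbv zeta.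
  destruct (Nat.eqb_spec (length (obligations n k (scale c))) 0) as [E|E].
  { exists (scale c), ws; split; [apply filter_In; split; [left; reflexivity | exact (realizes_coherent _ _ Hs)] | exact Hs]. }
  destruct (nth 0 (obligations n k (scale c)) (0, 0)) as [i j] eqn:Eo.
  assert (Ho : In (i, j) (obligations n k (scale c))) by (rewrite <- Eo; apply nth_In; lia).
  apply obligations_in in Ho as [Hi [Hj Hp]]; pose proof Hp as Hbox.
  unfold pending in Hbox; apply andb_true_iff in Hbox as [[Hbox _]%andb_true_iff _].
  destruct (pending_witness _ _ i j Hs Hi Hj Hp) as [t [Ht [Hr Hnt]]].
  destruct (extension_irect (scale c) ws t (proj2 Hs) (scale_grid c ws Hc)) as [R [HR [Hold [Hnew Hge]]]].
  pose proof (realizes_snoc _ _ R t Hs Ht Hold Hnew Hge) as Hext.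
  eexists; eexists; split; [|exact Hext].
  apply in_map_iff; exists (R, truth_vector t); split; [reflexivity|]; apply filter_In; split.
  - apply in_flat_map; exists R; split; [exact HR | apply in_map, truth_vector_in_tuples].
  - cbn [fst snd]; rewrite !andb_true_iff, negb_true_iff; split; [split|].
    + apply (relb_iff _ _ _ _ _ (proj2 (proj1 (is_box_spec j) Hbox)) (Hold i Hi)), Hr.
    + rewrite lbl_truth_vector by (pose proof (box_arg_lt j Hbox); lia).
      apply not_true_iff_false; rewrite holdsb_spec; exact Hnt.
    + exact (realizes_coherent _ _ Hext).
Qed.

Lemma iend_repeat12 m e : iend (repeat (1, 2) n) m e = if m <? n then S (Nat.b2n e) else 0.
Proof.
  unfold iend, ilo, ihi; destruct (Nat.ltb_spec m n).
  - rewrite nth_indep with (d' := (1, 2)) by (rewrite repeat_length; exact H).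
    rewrite nth_repeat; destruct e; reflexivity.
  - rewrite nth_overflow by (rewrite repeat_length; exact H); destruct e; reflexivity.
Qed.

Lemma realizes_initial s0 : W s0 -> holdsb k s0 = false ->
  exists c, In c (initial n k) /\ realizes c (fun _ => s0).
Proof.
  intros Hs0 Hk.
  assert (Hc : realizes [(repeat (1, 2) n, truth_vector s0)] (fun _ => s0)).
  { split; simpl; intros i; [|intros i']; intros Hi; [|intros Hi']; replace i with 0 by lia;
      [|replace i' with 0 by lia]; simpl.
    - split; [exact Hs0 | split; [reflexivity | intros m e Hm; rewrite iend_repeat12]].
      destruct (Nat.ltb_spec m n); lia.
    - intros [m Hm] e e'; simpl; rewrite !iend_repeat12, Rcompare_rend_self.
      destruct (Nat.ltb_spec m n); [|lia]; destruct e, e'; reflexivity. }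
  exists [(repeat (1, 2) n, truth_vector s0)]; split; [|exact Hc].
  apply filter_In; split; [|exact (realizes_coherent _ _ Hc)].
  apply in_map_iff; exists (truth_vector s0); split; [reflexivity|].
  apply filter_In; split; [apply truth_vector_in_tuples|].
  rewrite lbl_truth_vector, Hk by lia; reflexivity.
Qed.

Lemma search_realized s0 : W s0 -> holdsb k s0 = false ->
  forall d, exists c ws, In c (search n k d) /\ realizes c ws.
Proof.
  intros Hs0 Hk d; induction d as [|d [c [ws [Hin Hc]]]].
  - destruct (realizes_initial s0 Hs0 Hk) as [c Hc]; exists c, (fun _ => s0); exact Hc.
  - destruct (realizes_expand c ws Hc) as [c' [ws' [Hin' Hc']]].
    exists c', ws'; split; [apply in_flat_map; exists c; auto | exact Hc'].
Qed.
End Realization.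

Theorem search_nonempty_of_countermodel {n} (W : rect n -> Prop) V s0 phi :
  W s0 -> ~ sat W V s0 phi -> forall d, search n (code phi) d <> [].
Proof.
  intros Hs0 Hphi d E.
  assert (Hk : holdsb W V (code phi) s0 = false)
    by (apply not_true_iff_false; rewrite holdsb_spec, holds_code; exact Hphi).
  destruct (search_realized W V (code phi) s0 Hs0 Hk d) as [c [ws [Hin _]]].
  rewrite E in Hin; destruct Hin.
Qed.

(** * Completeness of the search *)

Section Koenig.
Context {A : Type} (f : A -> list A).

Definition unfold_tree d (l : list A) := Nat.iter d (flat_map f) l.

Definition infinite_from (x : A) := forall d, unfold_tree d [x] <> [].

Lemma unfold_tree_app d l1 l2 : unfold_tree d (l1 ++ l2) = unfold_tree d l1 ++ unfold_tree d l2.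
Proof. induction d; simpl; [reflexivity|]; fold (unfold_tree d); rewrite IHd; apply flat_map_app. Qed.

Lemma unfold_tree_nonempty d l : unfold_tree d l <> [] <-> exists x, In x l /\ unfold_tree d [x] <> [].
Proof.
  induction l as [|a l IH].
  - split; [|intros [x [[] _]]]; intros H; exfalso; apply H; clear H.
    induction d; simpl; [reflexivity|]; fold (unfold_tree d); rewrite IHd; reflexivity.
  - change (a :: l) with ([a] ++ l); rewrite unfold_tree_app; split.
    + intros H; destruct (unfold_tree d [a]) eqn:E; [|exists a; split; [left | rewrite E]; auto; discriminate].
      destruct (proj1 IH H) as [x [Hx Hd]]; exists x; split; [right|]; auto.
    + intros [x [[<- | Hx] Hd]] E; apply app_eq_nil in E as [E1 E2]; [contradiction|].
      apply (proj2 IH); eauto.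
Qed.

Lemma infinite_from_list l : (forall d, unfold_tree d l <> []) -> exists x, In x l /\ infinite_from x.
Proof.
  intros Hl; apply NNPP; intros Hno.
  assert (Hdead : forall x, In x l -> exists d, unfold_tree d [x] = []).
  { intros x Hx; apply NNPP; intros Hd; apply Hno; exists x; split; [exact Hx|].
    intros d E; apply Hd; eauto. }
  assert (Hmono : forall x d d', d <= d' -> unfold_tree d [x] = [] -> unfold_tree d' [x] = []).
  { intros x d d' Hle E; induction Hle as [|m _ IH]; [exact E|].
    change (unfold_tree (S m) [x]) with (flat_map f (unfold_tree m [x])); rewrite IH; reflexivity. }
  assert (exists D, forall x, In x l -> unfold_tree D [x] = []) as [D HD].
  { clear Hl Hno; induction l as [|a l IH]; [exists 0; intros _ []|].
    destruct IH as [D HD]; [intros; apply Hdead; right; auto|].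
    destruct (Hdead a (or_introl eq_refl)) as [d Hd].
    exists (Nat.max D d); intros x [<- | Hx]; [apply (Hmono _ d) | apply (Hmono _ D)]; auto; lia. }
  destruct (proj1 (unfold_tree_nonempty D l) (Hl D)) as [x [Hx Hne]]; exact (Hne (HD x Hx)).
Qed.

Lemma infinite_from_successor x : infinite_from x -> exists y, In y (f x) /\ infinite_from y.
Proof.
  intros H; apply infinite_from_list; intros d E; apply (H (S d)).
  unfold unfold_tree; rewrite Nat.iter_succ_r; simpl; rewrite app_nil_r; exact E.
Qed.

Lemma koenig x : infinite_from x -> exists p : nat -> A, p 0 = x /\ forall t, In (p (S t)) (f (p t)).
Proof.
  intros Hx.
  assert (Hnext : forall y, { z | infinite_from y -> In z (f y) /\ infinite_from z }).
  { intros y; apply constructive_indefinite_description.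
    destruct (classic (infinite_from y)) as [Hy | Hy];
      [destruct (infinite_from_successor y Hy) as [z Hz]; exists z | exists y]; tauto. }
  set (next := fun y => proj1_sig (Hnext y)).
  assert (Hp : forall t, infinite_from (Nat.iter t next x)).
  { induction t; [exact Hx|]; simpl; apply (proj2_sig (Hnext _) IHt). }
  exists (fun t => Nat.iter t next x); split; [reflexivity|].
  intros t; apply (proj2_sig (Hnext _) (Hp t)).
Qed.
End Koenig.

Definition wf_irect n (R : irect) := forall m, m < n -> ilo R m < ihi R m.

Section RectOf.
Local Open Scope R_scope.
Context {n : nat}.

Lemma rect_of_lt t (R : irect) (i : coord n) :
  INR (ilo R (proj1_sig i)) / 3 ^ t < INR (Nat.max (ihi R (proj1_sig i)) (S (ilo R (proj1_sig i)))) / 3 ^ t.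
Proof.
  apply Rmult_lt_compat_r; [apply Rinv_0_lt_compat, pow_lt; lra | apply lt_INR; lia].
Qed.

(* Stage-[t] integer coordinates are read at scale [3 ^ t]; [Nat.max] only guards the
   (unused) case of a degenerate integer rectangle. *)
Definition rect_of t (R : irect) : rect n :=
  {| lo := fun i => INR (ilo R (proj1_sig i)) / 3 ^ t;
     hi := fun i => INR (Nat.max (ihi R (proj1_sig i)) (S (ilo R (proj1_sig i)))) / 3 ^ t;
     lo_lt_hi := rect_of_lt t R |}.

Lemma rend_rect_of t R i e : wf_irect n R -> rend (rect_of t R) i e = INR (iend R (proj1_sig i) e) / 3 ^ t.
Proof.
  intros H; specialize (H (proj1_sig i) (proj2_sig i)); destruct e; simpl; [|reflexivity].
  rewrite Nat.max_l by lia; reflexivity.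
Qed.

Lemma compare_INR_div a b c : 0 < c -> Nat.compare a b = Rcompare (INR a / c) (INR b / c).
Proof.
  intros Hc; assert (Hinv : 0 < / c) by (apply Rinv_0_lt_compat, Hc); unfold Rdiv.
  destruct (Nat.compare_spec a b) as [<- | Hab%lt_INR | Hab%lt_INR];
    match goal with |- _ = Rcompare ?x ?y => destruct (Rcompare_spec x y) end; try reflexivity; nra.
Qed.

Lemma agree_rect_of t R S : wf_irect n R -> wf_irect n S -> agree R S (rect_of t R) (rect_of t S).
Proof.
  intros HR HS i e e'; rewrite !rend_rect_of by assumption.
  apply compare_INR_div, pow_lt; lra.
Qed.

Lemma rect_of_scale t q : wf_irect n (fst q) -> rect_of (S t) (fst (scale_node q)) = rect_of t (fst q).
Proof.
  intros H; apply rect_ext; intros i.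
  pose proof (iend_scale_node q (proj1_sig i) false) as E0; pose proof (iend_scale_node q (proj1_sig i) true) as E1.
  specialize (H (proj1_sig i) (proj2_sig i)); unfold iend in E0, E1; cbn [lo hi rect_of].
  rewrite E0, E1, !Nat.max_l by lia.
  rewrite !mult_INR, <- tech_pow_Rmult; simpl (INR 3); split; field; apply pow_nonzero; lra.
Qed.
End RectOf.

Lemma candidates_wf n k c q : In q (candidates n k c) -> wf_irect n (fst q).
Proof.
  intros [R [[Hlen HR]%tuples_in [H [<- _]]%in_map_iff]]%in_flat_map m Hm; simpl.
  unfold ilo, ihi; destruct (nth m R (0, 0)) as [a b] eqn:E.
  assert (In (a, b) R) as Hab%HR by (rewrite <- E; apply nth_In; lia).
  apply intervals_in in Hab; simpl; lia.
Qed.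

Lemma expand_cases n k c c' : In c' (expand n k c) -> coherent n k c' = true /\
  (obligations n k (scale c) = [] /\ c' = scale c \/ exists i j rest q, obligations n k (scale c) = (i, j) :: rest /\ c' = scale c ++ [q] /\
     In q (candidates n k (scale c)) /\
     relb n (box_rel j) (fst (nth i (scale c) dnode)) (fst q) && negb (lbl (snd q) (box_arg j)) = true).
Proof.
  unfold expand; cbv zeta; destruct (obligations n k (scale c)) as [|[i j] rest] eqn:E;
    cbn [length Nat.eqb nth].
  - intros [[<- | []] Hcoh]%filter_In; split; [exact Hcoh | left; split; reflexivity].
  - unfold successors; intros [q [<- [Hq Hok]%filter_In]]%in_map_iff.
    apply andb_true_iff in Hok as [Hok Hcoh]; split; [exact Hcoh | right; exists i, j, rest, q; auto].
Qed.

Lemma relb_scale_node n c p q (s t : rect n) : c < 8 -> agree (fst p) (fst q) s t ->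
  relb n c (fst (scale_node p)) (fst (scale_node q)) = relb n c (fst p) (fst q).
Proof.
  intros Hc H; apply eq_iff_eq_true.
  rewrite (relb_iff _ _ _ _ _ Hc H), (relb_iff _ _ _ _ _ Hc (agree_scale_node _ _ _ _ H)); reflexivity.
Qed.

Lemma scale_wf n c q : (forall q0, In q0 c -> wf_irect n (fst q0)) -> In q (scale c) -> wf_irect n (fst q).
Proof.
  intros Hc [q0 [<- Hq0]]%in_map_iff m Hm; specialize (Hc q0 Hq0 m Hm).
  pose proof (iend_scale_node q0 m false); pose proof (iend_scale_node q0 m true); unfold iend in *; simpl in *; lia.
Qed.

Lemma existsb_map_ext {A B} (f : B -> bool) (g : A -> B) (h : A -> bool) l :
  (forall x, In x l -> f (g x) = h x) -> existsb f (map g l) = existsb h l.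
Proof.
  intros H; induction l as [|a l IH]; simpl; [reflexivity|].
  rewrite H, IH; [reflexivity | intros x Hx; apply H; right; exact Hx | left; reflexivity].
Qed.

Lemma witnessed_scale n c i j : (forall q, In q c -> wf_irect n (fst q)) -> i < length c -> box_rel j < 8 ->
  witnessed n (scale c) (nth i (scale c) dnode) j = witnessed n c (nth i c dnode) j.
Proof.
  intros Hwf Hi Hj; rewrite nth_scale; unfold witnessed, scale; apply existsb_map_ext; intros q Hq.
  rewrite (relb_scale_node _ _ _ _ _ _ Hj (agree_rect_of 0 _ _ (Hwf _ (nth_In _ _ Hi)) (Hwf _ Hq))).
  reflexivity.
Qed.

Lemma pending_scale n c i j : (forall q, In q c -> wf_irect n (fst q)) -> i < length c ->
  pending n (scale c) i j = pending n c i j.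
Proof.
  intros Hwf Hi; unfold pending; destruct (is_box j) eqn:B; [|reflexivity].
  rewrite witnessed_scale, nth_scale by (apply Hwf || apply is_box_spec in B; tauto); reflexivity.
Qed.

Lemma flat_map_pairs_head_le (g : nat -> list nat) a m i j i1 j1 rest :
  flat_map (fun i => map (fun j => (i, j)) (g i)) (seq a m) = (i1, j1) :: rest ->
  In (i, j) (flat_map (fun i => map (fun j => (i, j)) (g i)) (seq a m)) -> i1 <= i.
Proof.
  revert a; induction m as [|m IH]; intros a E Hin; [discriminate|]; simpl in E, Hin.
  destruct (g a) as [|j0 l]; simpl in E, Hin; [eapply IH; eauto|].
  injection E as <- _.
  destruct Hin as [[= <- _] | [[? [[= <- _] _]]%in_map_iff | [i' [Hi'%in_seq [? [[= <- _] _]]%in_map_iff]]%in_flat_map]%in_app_or];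
    lia.
Qed.

Lemma obligations_head_le n k c i j i1 j1 rest :
  obligations n k c = (i1, j1) :: rest -> In (i, j) (obligations n k c) -> i1 <= i.
Proof. apply flat_map_pairs_head_le. Qed.

Lemma filter_length_le_mono {A} (f g : A -> bool) l :
  (forall x, In x l -> g x = true -> f x = true) -> length (filter g l) <= length (filter f l).
Proof.
  induction l as [|a l IH]; intros H; simpl; [lia|].
  destruct (g a) eqn:Ga; [rewrite (H a (or_introl eq_refl) Ga)|destruct (f a)]; simpl;
    specialize (IH (fun x Hx => H x (or_intror Hx))); lia.
Qed.

Lemma filter_length_lt {A} (f g : A -> bool) l :
  (forall x, In x l -> g x = true -> f x = true) -> (exists x, In x l /\ f x = true /\ g x = false) ->
  length (filter g l) < length (filter f l).
Proof.
  induction l as [|a l IH]; intros H [x [Hx [Fx Gx]]]; [destruct Hx|]; simpl.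
  assert (Hl := fun x Hx => H x (or_intror Hx)).
  destruct Hx as [<- | Hx].
  - rewrite Fx, Gx; simpl; pose proof (filter_length_le_mono f g l Hl); lia.
  - specialize (IH Hl (ex_intro _ x (conj Hx (conj Fx Gx)))).
    destruct (g a) eqn:Ga; [rewrite (H a (or_introl eq_refl) Ga) | destruct (f a)]; simpl; lia.
Qed.

Lemma coherent_bool_ok n k c i : coherent n k c = true -> i < length c ->
  bool_ok k (snd (nth i c dnode)) = true.
Proof.
  intros [H _]%andb_true_iff Hi; rewrite forallb_forall in H; exact (H _ (nth_In _ dnode Hi)).
Qed.

Lemma coherent_pair_ok n k c i i' : coherent n k c = true -> i < length c -> i' < length c ->
  pair_ok n k (nth i c dnode) (nth i' c dnode) = true.
Proof.
  intros [_ H]%andb_true_iff Hi Hi'; rewrite forallb_forall in H.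
  specialize (H _ (nth_In _ dnode Hi)); rewrite forallb_forall in H; exact (H _ (nth_In _ dnode Hi')).
Qed.

Lemma bool_ok_at k H j : bool_ok k H = true -> j <= k ->
  (cfst j = 1 -> lbl H j = negb (lbl H (csnd j))) /\
  (cfst j = 2 -> lbl H j = lbl H (cfst (csnd j)) && lbl H (csnd (csnd j))).
Proof.
  intros Hok Hj; unfold bool_ok in Hok; rewrite forallb_forall in Hok.
  specialize (Hok j ltac:(apply in_seq; lia)); apply andb_true_iff in Hok as [H1 H2].
  split; intros E; rewrite E in *; apply eqb_true_iff; assumption.
Qed.

Lemma pair_ok_eq n k p q j : pair_ok n k p q = true -> eqrb n (fst p) (fst q) = true -> j <= k ->
  lbl (snd p) j = lbl (snd q) j.
Proof.
  intros [H _]%andb_true_iff E Hj; rewrite E in H; cbn [implb] in H; rewrite forallb_forall in H.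
  apply eqb_true_iff, H, in_seq; lia.
Qed.

Lemma pair_ok_box n k p q j : pair_ok n k p q = true -> j <= k -> is_box j = true ->
  relb n (box_rel j) (fst p) (fst q) = true -> lbl (snd p) j = true -> lbl (snd q) (box_arg j) = true.
Proof.
  intros [_ H]%andb_true_iff Hj B R L; rewrite forallb_forall in H.
  specialize (H j ltac:(apply in_seq; lia)); rewrite B, R, L in H; exact H.
Qed.

Section Branch.
Variables (n k : nat) (p : nat -> config).
Hypothesis Hp0 : In (p 0) (initial n k).
Hypothesis Hpath : forall t, In (p (S t)) (expand n k (p t)).

Definition node_at t i := nth i (p t) dnode.
Definition rect_at t i : rect n := rect_of t (fst (node_at t i)).

Lemma branch_coherent t : coherent n k (p t) = true.
Proof.
  destruct t; [|apply (expand_cases _ _ _ _ (Hpath t))].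
  apply filter_In in Hp0; apply Hp0.
Qed.

Lemma branch_wf t q : In q (p t) -> wf_irect n (fst q).
Proof.
  revert q; induction t as [|t IH]; intros q Hq.
  - apply filter_In in Hp0 as [[H [E _]]%in_map_iff _]; rewrite <- E in Hq; destruct Hq as [<- | []].
    intros m Hm; unfold ilo, ihi; simpl; rewrite nth_indep with (d' := (1, 2)) by (rewrite repeat_length; exact Hm).
    rewrite nth_repeat; simpl; lia.
  - destruct (expand_cases _ _ _ _ (Hpath t)) as [_ [[_ E] | [i [j [rest [q' [_ [E [Hq' _]]]]]]]]]; rewrite E in Hq.
    + exact (scale_wf _ _ _ IH Hq).
    + apply in_app_or in Hq as [Hq | [<- | []]]; [exact (scale_wf _ _ _ IH Hq) | exact (candidates_wf _ _ _ _ Hq')].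
Qed.

Lemma branch_prefix t : exists extra, p (S t) = scale (p t) ++ extra.
Proof.
  destruct (expand_cases _ _ _ _ (Hpath t)) as [_ [[_ E] | [i [j [rest [q [_ [E _]]]]]]]]; rewrite E; eauto.
  exists []; rewrite app_nil_r; reflexivity.
Qed.

Lemma node_at_S t i : i < length (p t) ->
  i < length (p (S t)) /\ node_at (S t) i = scale_node (node_at t i).
Proof.
  intros Hi; destruct (branch_prefix t) as [extra E]; unfold node_at; rewrite E.
  assert (Hlen : length (scale (p t)) = length (p t)) by apply length_map.
  rewrite length_app, app_nth1, nth_scale by lia; split; [lia | reflexivity].
Qed.

Lemma branch_stable t t' i : t <= t' -> i < length (p t) ->
  i < length (p t') /\ rect_at t' i = rect_at t i /\ snd (node_at t' i) = snd (node_at t i).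
Proof.
  intros Ht Hi; induction Ht as [|t' _ [Hi' [Er El]]]; [auto|].
  destruct (node_at_S t' i Hi') as [HiS E]; unfold rect_at in *; rewrite E, rect_of_scale, Er;
    [auto | apply (branch_wf t'), nth_In, Hi'].
Qed.

Lemma branch_agree t i i' : i < length (p t) -> i' < length (p t) ->
  agree (fst (node_at t i)) (fst (node_at t i')) (rect_at t i) (rect_at t i').
Proof. intros Hi Hi'; apply agree_rect_of; apply (branch_wf t), nth_In; assumption. Qed.

Lemma branch_relb_iff t i i' c : c < 8 -> i < length (p t) -> i' < length (p t) ->
  relb n c (fst (node_at t i)) (fst (node_at t i')) = true <-> rcc8_rel (rcc8_of c) (rect_at t i) (rect_at t i').
Proof. intros Hc Hi Hi'; apply relb_iff, branch_agree; assumption. Qed.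

Lemma branch_witnessed_S t i j : i < length (p t) -> box_rel j < 8 ->
  witnessed n (p t) (node_at t i) j = true -> witnessed n (p (S t)) (node_at (S t) i) j = true.
Proof.
  intros Hi Hj [q [Hq Hw]]%existsb_exists; destruct (In_nth _ _ dnode Hq) as [q0 [Hq0 <-]].
  destruct (node_at_S t q0 Hq0) as [Hq0S Eq], (node_at_S t i Hi) as [_ Ei].
  apply existsb_exists; exists (node_at (S t) q0); split; [apply nth_In, Hq0S|].
  rewrite Ei, Eq; change (snd (scale_node (node_at t q0))) with (snd (node_at t q0)).
  rewrite (relb_scale_node _ _ _ _ _ _ Hj (branch_agree t i q0 Hi Hq0)); exact Hw.
Qed.

Lemma branch_pending_S t i j : i < length (p t) ->
  pending n (p (S t)) i j = true -> pending n (p t) i j = true.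
Proof.
  intros Hi; unfold pending; fold (node_at (S t) i) (node_at t i).
  rewrite (proj2 (proj2 (branch_stable t (S t) i (le_S _ _ (le_n _)) Hi))).
  destruct (is_box j) eqn:B; [simpl | discriminate].
  destruct (witnessed n (p t) (node_at t i) j) eqn:Ew; simpl.
  - rewrite (branch_witnessed_S t i j Hi (proj2 (proj1 (is_box_spec j) B)) Ew); simpl.
    rewrite !andb_false_r; discriminate.
  - rewrite andb_true_r; intros [H _]%andb_true_iff; exact H.
Qed.

Lemma branch_handles_first t i j rest : obligations n k (scale (p t)) = (i, j) :: rest ->
  i < length (p t) /\ witnessed n (p (S t)) (node_at (S t) i) j = true.
Proof.
  intros E; destruct (expand_cases _ _ _ _ (Hpath t)) as [_ [[E' _] | [i' [j' [rest' [q [E' [Ep [_ Hq]]]]]]]]];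
    rewrite E in E'; [discriminate | injection E' as <- <- <-].
  assert (Hi : i < length (scale (p t))) by (apply (obligations_in n k _ i j); rewrite E; left; reflexivity).
  split; [unfold scale in Hi; rewrite length_map in Hi; exact Hi|].
  apply existsb_exists; exists q; unfold node_at; rewrite Ep, app_nth1 by exact Hi.
  split; [apply in_or_app; right; left; reflexivity | exact Hq].
Qed.

Lemma branch_progress t i j : i < length (p t) -> j <= k -> pending n (p t) i j = true ->
  exists i1 j1, i1 <= i /\ j1 <= k /\ pending n (p t) i1 j1 = true /\ pending n (p (S t)) i1 j1 = false.
Proof.
  intros Hi Hj Hpend; pose proof (branch_wf t) as Hwf.
  assert (Hob : In (i, j) (obligations n k (scale (p t)))).
  { apply obligations_in; unfold scale at 1; rewrite length_map, pending_scale by assumption; auto. }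
  destruct (obligations n k (scale (p t))) as [|[i1 j1] rest] eqn:E; [destruct Hob|].
  pose proof (obligations_head_le _ _ _ _ _ _ _ _ E ltac:(rewrite E; exact Hob)) as Hle.
  assert (Hob1 : In (i1, j1) (obligations n k (scale (p t)))) by (rewrite E; left; reflexivity).
  apply obligations_in in Hob1 as [Hi1 [Hj1 Hp1]].
  unfold scale at 1 in Hi1; rewrite length_map in Hi1; rewrite pending_scale in Hp1 by assumption.
  destruct (branch_handles_first t i1 j1 rest E) as [_ Hw]; unfold node_at in Hw.
  exists i1, j1; repeat split; try assumption.
  unfold pending; rewrite Hw, andb_false_r; reflexivity.
Qed.

Lemma branch_fair t i j : i < length (p t) -> j <= k -> is_box j = true ->
  lbl (snd (node_at t i)) j = false -> exists t', t <= t' /\ witnessed n (p t') (node_at t' i) j = true.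
Proof.
  intros Hi Hj Hbox Hlbl; apply NNPP; intros Hnever.
  assert (Hpend : forall t', t <= t' -> pending n (p t') i j = true).
  { intros t' Ht'; destruct (branch_stable t t' i Ht' Hi) as [_ [_ El]].
    unfold pending; fold (node_at t' i); rewrite Hbox, El, Hlbl; simpl.
    destruct (witnessed n (p t') (node_at t' i) j) eqn:E; [exfalso; apply Hnever; eauto | reflexivity]. }
  set (pairs := list_prod (seq 0 (S i)) (seq 0 (S k))).
  set (measure := fun t' => length (filter (fun ij => pending n (p t') (fst ij) (snd ij)) pairs)).
  assert (Hdec : forall t', t <= t' -> measure (S t') < measure t').
  { intros t' Ht'; destruct (branch_stable t t' i Ht' Hi) as [Hi' _].
    destruct (branch_progress t' i j Hi' Hj (Hpend t' Ht')) as [i1 [j1 [Hi1 [Hj1 [Hp Hp']]]]].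
    apply filter_length_lt.
    - intros [i2 j2] [Hi2%in_seq _]%in_prod_iff; apply branch_pending_S; simpl in *; lia.
    - exists (i1, j1); split; [apply in_prod; apply in_seq; lia | auto]. }
  assert (Hdrop : forall m, measure (t + m) + m <= measure t).
  { induction m; [rewrite !Nat.add_0_r; lia|].
    specialize (Hdec (t + m) ltac:(lia)); replace (t + S m) with (S (t + m)) by lia; lia. }
  specialize (Hdrop (S (measure t))); lia.
Qed.

Lemma branch_common t i t' i' : i < length (p t) -> i' < length (p t') ->
  exists T, i < length (p T) /\ i' < length (p T) /\
    rect_at T i = rect_at t i /\ rect_at T i' = rect_at t' i' /\
    snd (node_at T i) = snd (node_at t i) /\ snd (node_at T i') = snd (node_at t' i').
Proof.
  intros Hi Hi'; exists (Nat.max t t').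
  destruct (branch_stable t (Nat.max t t') i ltac:(lia) Hi) as [? [? ?]].
  destruct (branch_stable t' (Nat.max t t') i' ltac:(lia) Hi') as [? [? ?]].
  repeat split; assumption.
Qed.

Definition branch_W (w : rect n) := exists t i, i < length (p t) /\ w = rect_at t i.
Definition branch_V x (w : rect n) :=
  exists t i, i < length (p t) /\ w = rect_at t i /\ lbl (snd (node_at t i)) (code (Var x)) = true.

Lemma branch_var x t i : code (Var x) <= k -> i < length (p t) ->
  branch_V x (rect_at t i) <-> lbl (snd (node_at t i)) (code (Var x)) = true.
Proof.
  intros Hk Hi; split; [|intros H; exists t, i; auto].
  intros [t' [i' [Hi' [E Hl]]]].
  destruct (branch_common t i t' i' Hi Hi') as [T [HiT [Hi'T [Er [Er' [El El']]]]]].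
  rewrite <- El, <- Hl, <- El'; apply (pair_ok_eq n k); [apply coherent_pair_ok; auto using branch_coherent | | exact Hk].
  apply (eqrb_eq_iff _ _ _ _ (branch_agree T i i' HiT Hi'T)); congruence.
Qed.

Lemma branch_box r a t i : code (Box r a) <= k -> i < length (p t) ->
  (forall t' i', i' < length (p t') ->
     sat branch_W branch_V (rect_at t' i') a <-> lbl (snd (node_at t' i')) (code a) = true) ->
  sat branch_W branch_V (rect_at t i) (Box r a) <-> lbl (snd (node_at t i)) (code (Box r a)) = true.
Proof.
  intros Hk Hi IH; simpl sat.
  pose proof (code_Box_is_box r a) as B; pose proof (box_arg_lt _ B) as Ha.
  pose proof (proj2 (proj1 (is_box_spec _) B)) as Hr.
  rewrite box_arg_code in Ha; split.
  - intros Hsat; apply not_false_iff_true; intros Hl.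
    destruct (branch_fair t i _ Hi Hk B Hl) as [t' [Ht' [q [Hq Hw]]%existsb_exists]].
    destruct (In_nth _ _ dnode Hq) as [q0 [Hq0 <-]]; apply andb_true_iff in Hw as [Hrel Hnl].
    destruct (branch_stable t t' i Ht' Hi) as [Hi' [Er _]].
    apply (branch_relb_iff t' i q0 _ Hr Hi' Hq0) in Hrel; rewrite Er, box_rel_code, rcc8_of_code in Hrel.
    apply (IH t' q0 Hq0) in Hsat; [|exists t', q0; auto | exact Hrel].
    rewrite box_arg_code in Hnl; unfold node_at in Hsat; rewrite Hsat in Hnl; discriminate.
  - intros Hl w [t' [q [Hq ->]]] Hrel.
    destruct (branch_common t i t' q Hi Hq) as [T [HiT [HqT [Er [Eq [El Elq]]]]]].
    assert (Hrb : relb n (box_rel (code (Box r a))) (fst (node_at T i)) (fst (node_at T q)) = true).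
    { apply (branch_relb_iff T i q _ Hr HiT HqT); rewrite box_rel_code, rcc8_of_code, Er, Eq; exact Hrel. }
    pose proof (pair_ok_box n k _ _ _ (coherent_pair_ok _ _ _ _ _ (branch_coherent T) HiT HqT) Hk B Hrb
      ltac:(unfold node_at in El; rewrite El; exact Hl)) as Hlq.
    rewrite box_arg_code in Hlq; rewrite <- Eq; apply (IH T q HqT), Hlq.
Qed.

Lemma branch_truth phi : code phi <= k -> forall t i, i < length (p t) ->
  sat branch_W branch_V (rect_at t i) phi <-> lbl (snd (node_at t i)) (code phi) = true.
Proof.
  induction phi as [x | a IH | a IHa b IHb | r a IH]; intros Hk t i Hi.
  - apply branch_var; assumption.
  - pose proof (bool_ok_at k _ _ (coherent_bool_ok _ _ _ _ (branch_coherent t) Hi) Hk) as [Hneg _].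
    assert (code a < code (Neg a)) by (apply cpair_gt_r; lia).
    simpl sat; rewrite IH by lia; unfold node_at in *; rewrite Hneg by apply cfst_cpair.
    simpl code; rewrite csnd_cpair; destruct (lbl _ (code a)); simpl; split; congruence.
  - pose proof (bool_ok_at k _ _ (coherent_bool_ok _ _ _ _ (branch_coherent t) Hi) Hk) as [_ Hand].
    destruct (payload_lt (code (And a b)) ltac:(simpl; rewrite cfst_cpair; lia)) as [_ [Ha Hb]].
    simpl code in Ha, Hb, Hk; rewrite csnd_cpair, cfst_cpair in Ha; rewrite !csnd_cpair in Hb.
    simpl sat; rewrite IHa, IHb by lia; unfold node_at in *; rewrite Hand by apply cfst_cpair.
    simpl code; rewrite !csnd_cpair, cfst_cpair, andb_true_iff; reflexivity.
  - apply branch_box; auto; intros; apply IH; auto.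
    pose proof (box_arg_lt _ (code_Box_is_box r a)); rewrite box_arg_code in *; lia.
Qed.

End Branch.

Lemma initial_shape n k c : In c (initial n k) -> exists H, c = [(repeat (1, 2) n, H)] /\ lbl H k = false.
Proof.
  intros [[H [<- [_ Hk]%filter_In]]%in_map_iff _]%filter_In; exists H; split; [reflexivity|].
  apply negb_true_iff, Hk.
Qed.

Theorem countermodel_of_search_nonempty n phi : (forall d, search n (code phi) d <> []) ->
  exists (W : rect n -> Prop) V s, W s /\ ~ sat W V s phi.
Proof.
  intros Hsearch.
  destruct (infinite_from_list (expand n (code phi)) (initial n (code phi)) Hsearch) as [c0 [Hc0 Hinf]].
  destruct (koenig _ c0 Hinf) as [p [<- Hpath]].
  destruct (initial_shape _ _ _ Hc0) as [H [E Hl]].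
  assert (H0 : 0 < length (p 0)) by (rewrite E; simpl; lia).
  exists (branch_W n p), (branch_V n p), (rect_at n p 0 0); split; [exists 0, 0; auto|].
  rewrite (branch_truth n (code phi) p Hc0 Hpath phi (le_n _) 0 0 H0).
  unfold node_at; rewrite E; simpl; rewrite Hl; discriminate.
Qed.

Theorem LS_rect_iff_search_dies n phi : LS_rect n phi <-> exists d, search n (code phi) d = [].
Proof.
  split.
  - intros Hvalid; apply NNPP; intros Hnone.
    destruct (countermodel_of_search_nonempty n phi) as [W [V [s [Hs Hns]]]];
      [intros d Hd; apply Hnone; eauto | apply Hns, Hvalid; eauto].
  - intros [d Hd] W _ V s Hs; apply NNPP; intros Hns.
    exact (search_nonempty_of_countermodel W V s phi Hs Hns d Hd).
Qed.

Theorem theorem6p2 : forall n : nat, (1 <= n)%nat -> re_form (LS_rect n).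
Proof.
  intros n _; apply (re_nat_of_computable_search _ (fun d k => refuted n k d) (computable_refuted n)).
  intros k; unfold refuted; split.
  - intros [phi [<- [d Hd]%LS_rect_iff_search_dies]].
    exists d; rewrite is_code_code, Hd; reflexivity.
  - intros [d [[phi <-]%is_code_spec Hd%Nat.eqb_eq]%andb_true_iff].
    exists phi; split; [reflexivity|]; apply LS_rect_iff_search_dies.
    exists d; apply length_zero_iff_nil, Hd.
Qed.
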